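(* Let $1\le\alpha\le d$, $k\ge1$, $S_\alpha=(\mathrm{Id}_n+W_\alpha V_\alpha)\cdots(\mathrm{Id}_n+W_1V_1)Z$. With the convention $\dot F=\{H,F\}$, the flow of $H=\frac1k\operatorname{tr}S_\alpha^k$ on $\mathcal C^\times_{n,d,q}$ starting at (the class of) $(X,Z,V_\beta,W_\beta)$ is given by $X(t)=Xe^{-tS_\alpha^k}$, $Z(t)=e^{tS_\alpha^k}Ze^{-tS_\alpha^k}$, $V_\beta(t)=V_\beta e^{-tS_\alpha^k}$ and $W_\beta(t)=e^{tS_\alpha^k}W_\beta$ for $\beta\le\alpha$, $V_\beta(t)=V_\beta$ and $W_\beta(t)=W_\beta$ for $\beta>\alpha$, where $S_\alpha$ is evaluated at the initial point. The flow is complete on $\mathcal C^\times_{n,d,q}$.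
   Context: Fix integers $n\ge1$, $d\ge1$ and $q\in\mathbb C^\times$ not a root of unity. Greek indices range over $\{1,\dots,d\}$; set $o(\alpha,\beta)=0$ if $\alpha=\beta$, $o(\alpha,\beta)=1$ if $\alpha<\beta$, $o(\alpha,\beta)=-1$ if $\alpha>\beta$. Let $\mathcal M^\times_{n,d,q}$ be the affine variety of tuples $(X,Z,V_1,\dots,V_d,W_1,\dots,W_d)$ with $X,Z\in\mathrm{GL}_n(\mathbb C)$, $V_\alpha\in\mathrm{Mat}_{1\times n}(\mathbb C)$, $W_\alpha\in\mathrm{Mat}_{n\times 1}(\mathbb C)$, such that every $\mathrm{Id}_n+W_\alpha V_\alpha$ is invertible and $XZX^{-1}Z^{-1}(\mathrm{Id}_n+W_1V_1)^{-1}\cdots(\mathrm{Id}_n+W_dV_d)^{-1}=q\,\mathrm{Id}_n$. $\mathrm{GL}_n$ acts by $g\cdot(X,Z,V_\alpha,W_\alpha)=(gXg^{-1},gZg^{-1},V_\alpha g^{-1},gW_\alpha)$; the action is free and $\mathcal C^\times_{n,d,q}=\mathcal M^\times_{n,d,q}/\!/\mathrm{GL}_n$ is a smooth affine variety of dimension $2nd$ with $\mathbb C[\mathcal C^\times_{n,d,q}]=\mathbb C[\mathcal M^\times_{n,d,q}]^{\mathrm{GL}_n}$. Write $V_{\alpha,j}$, $W_{\alpha,k}$ for the entries. Let $\{-,-\}$ be the antisymmetric biderivation on functions of $(X,Z,V_\alpha,W_\alpha)$ (Van den Bergh's quasi-Poisson bracket) given by $\{X_{ij},X_{kl}\}=\tfrac12(\delta_{il}(X^2)_{kj}-\delta_{kj}(X^2)_{il})$,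 $\{Z_{ij},Z_{kl}\}=\tfrac12(\delta_{kj}(Z^2)_{il}-\delta_{il}(Z^2)_{kj})$, $\{X_{ij},Z_{kl}\}=\tfrac12((ZX)_{kj}\delta_{il}+\delta_{kj}(XZ)_{il}+Z_{kj}X_{il}-X_{kj}Z_{il})$, $\{U_{ij},W_{\alpha,k}\}=\tfrac12(\delta_{kj}(UW_\alpha)_i-U_{kj}W_{\alpha,i})$, $\{U_{ij},V_{\alpha,l}\}=\tfrac12((V_\alpha U)_j\delta_{il}-V_{\alpha,j}U_{il})$ for $U\in\{X,Z\}$, $\{V_{\alpha,j},V_{\beta,l}\}=\tfrac12 o(\beta,\alpha)(V_{\beta,j}V_{\alpha,l}+V_{\alpha,j}V_{\beta,l})$, $\{W_{\alpha,i},W_{\beta,k}\}=\tfrac12 o(\beta,\alpha)(W_{\beta,k}W_{\alpha,i}+W_{\alpha,k}W_{\beta,i})$, $\{V_{\alpha,j},W_{\beta,k}\}=\delta_{\alpha\beta}(\delta_{kj}+\tfrac12W_{\alpha,k}V_{\alpha,j}+\tfrac12\delta_{kj}V_\alpha W_\alpha)+\tfrac12 o(\alpha,\beta)(\delta_{kj}V_\alpha W_\beta+W_{\beta,k}V_{\alpha,j})$. Restricted to $\mathrm{GL}_n$-invariant functions this bracket induces a non-degenerate Poisson bracket on $\mathcal C^\times_{n,d,q}$ (quasi-Hamiltonian reduction); this is the Poisson bracket $\{-,-\}$ on $\mathcal C^\times_{n,d,q}$. Flows of invariant $H$ are computed on representatives by $\dot M_{ij}=\{H,M_{ij}\}$.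 *)

(* complex numbers built on Stdlib reals, matrices as
   functions on indices (only indices < n are meaningful). *)
From Stdlib Require Import Reals List Arith ClassicalEpsilon.
Import ListNotations.
Open Scope R_scope.

Record Cx := mkC { Re : R; Im : R }.
Definition C0 : Cx := mkC 0 0.
Definition C1 : Cx := mkC 1 0.
Definition RtoC (r : R) : Cx := mkC r 0.
Definition Cadd (a b : Cx) : Cx := mkC (Re a + Re b) (Im a + Im b).
Definition Copp (a : Cx) : Cx := mkC (- Re a) (- Im a).
Definition Csub (a b : Cx) : Cx := Cadd a (Copp b).
Definition Cmul (a b : Cx) : Cx :=
  mkC (Re a * Re b - Im a * Im b) (Re a * Im b + Im a * Re b).
Definition Cnorm2 (a : Cx) : R := Re a * Re a + Im a * Im a.
Definition Cinv (a : Cx) : Cx := mkC (Re a / Cnorm2 a) (- Im a / Cnorm2 a).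
Definition Cdiv (a b : Cx) : Cx := Cmul a (Cinv b).
Definition Cmod (a : Cx) : R := sqrt (Cnorm2 a).
Fixpoint Cpow (a : Cx) (m : nat) : Cx :=
  match m with O => C1 | S m' => Cmul a (Cpow a m') end.

Definition has_cderiv (f : Cx -> Cx) (z0 L : Cx) : Prop :=
  forall eps : R, eps > 0 -> exists delta : R, delta > 0 /\
    forall h : Cx, h <> C0 -> Cmod h < delta ->
      Cmod (Csub (Cdiv (Csub (f (Cadd z0 h)) (f z0)) h) L) < eps.

Fixpoint csum (m : nat) (f : nat -> Cx) : Cx :=
  match m with O => C0 | S m' => Cadd (csum m' f) (f m') end.
Definition clsum {A : Type} (l : list A) (f : A -> Cx) : Cx :=
  fold_right (fun x acc => Cadd (f x) acc) C0 l.

Definition mat := nat -> nat -> Cx.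
Definition mId : mat := fun i j => if Nat.eqb i j then C1 else C0.
Definition madd (A B : mat) : mat := fun i j => Cadd (A i j) (B i j).
Definition mscale (c : Cx) (A : mat) : mat := fun i j => Cmul c (A i j).
Definition mmul (n : nat) (A B : mat) : mat :=
  fun i j => csum n (fun l => Cmul (A i l) (B l j)).
Fixpoint mpow (n : nat) (A : mat) (m : nat) : mat :=
  match m with O => mId | S m' => mmul n A (mpow n A m') end.
Definition mtr (n : nat) (A : mat) : Cx := csum n (fun i => A i i).
Definition meq (n : nat) (A B : mat) : Prop :=
  forall i j, (i < n)%nat -> (j < n)%nat -> A i j = B i j.
Definition is_inverse (n : nat) (A B : mat) : Prop :=
  meq n (mmul n A B) mId /\ meq n (mmul n B A) mId.
Definition invertible (n : nat) (A : mat) : Prop := exists B, is_inverse n A B.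
(* the inverse matrix (unique up to meq when A is invertible) *)
Definition minv (n : nat) (A : mat) : mat :=
  epsilon (inhabits mId) (fun B => is_inverse n A B).
Fixpoint mprod_up (n : nat) (A : nat -> mat) (m : nat) : mat :=
  match m with O => mId | S m' => mmul n (mprod_up n A m') (A m') end.
Fixpoint mprod_down (n : nat) (A : nat -> mat) (m : nat) : mat :=
  match m with O => mId | S m' => mmul n (A m') (mprod_down n A m') end.

Definition exp_partial (n : nat) (A : mat) (N : nat) : mat :=
  fun i j => csum (S N) (fun m => Cmul (RtoC (/ INR (fact m))) (mpow n A m i j)).
Definition is_mexp (n : nat) (A E : mat) : Prop :=
  forall i j, (i < n)%nat -> (j < n)%nat ->
    Un_cv (fun N => Re (exp_partial n A N i j)) (Re (E i j)) /\
    Un_cv (fun N => Im (exp_partial n A N i j)) (Im (E i j)).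
Definition mexp (n : nat) (A : mat) : mat :=
  epsilon (inhabits mId) (fun E => is_mexp n A E).

(* Multiplicity index alpha is 0-based: alpha = 0..d-1 stands for 1..d. *)
Record point := mkPt {
  pX : mat; pZ : mat;
  pV : nat -> nat -> Cx;   (* pV a j = V_{a,j}  (row vector V_a) *)
  pW : nat -> nat -> Cx    (* pW a i = W_{a,i}  (column vector W_a) *)
}.
Definition IWV (p : point) (a : nat) : mat :=
  madd mId (fun i j => Cmul (pW p a i) (pV p a j)).

Definition root_of_unity (q : Cx) : Prop := exists m : nat, (m >= 1)%nat /\ Cpow q m = C1.

Definition in_M (n d : nat) (q : Cx) (p : point) : Prop :=
  invertible n (pX p) /\ invertible n (pZ p) /\
  (forall a, (a < d)%nat -> invertible n (IWV p a)) /\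
  meq n (mmul n (mmul n (mmul n (mmul n (pX p) (pZ p)) (minv n (pX p))) (minv n (pZ p)))
            (mprod_up n (fun a => minv n (IWV p a)) d))
        (mscale q mId).

Inductive coord := cX (i j : nat) | cZ (i j : nat) | cV (a j : nat) | cW (a i : nat).

Definition coords (n d : nat) : list coord :=
  map (fun ij => cX (fst ij) (snd ij)) (list_prod (seq 0 n) (seq 0 n)) ++
  map (fun ij => cZ (fst ij) (snd ij)) (list_prod (seq 0 n) (seq 0 n)) ++
  map (fun aj => cV (fst aj) (snd aj)) (list_prod (seq 0 d) (seq 0 n)) ++
  map (fun aj => cW (fst aj) (snd aj)) (list_prod (seq 0 d) (seq 0 n)).

Definition coord_val (p : point) (c : coord) : Cx :=
  match c with
  | cX i j => pX p i j | cZ i j => pZ p i j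
  | cV a j => pV p a j | cW a i => pW p a i end.

Definition addat (F : nat -> nat -> Cx) (a b : nat) (z : Cx) : nat -> nat -> Cx :=
  fun x y => if andb (Nat.eqb x a) (Nat.eqb y b) then Cadd (F x y) z else F x y.
Definition upd (p : point) (c : coord) (z : Cx) : point :=
  match c with
  | cX i j => mkPt (addat (pX p) i j z) (pZ p) (pV p) (pW p)
  | cZ i j => mkPt (pX p) (addat (pZ p) i j z) (pV p) (pW p)
  | cV a j => mkPt (pX p) (pZ p) (addat (pV p) a j z) (pW p)
  | cW a i => mkPt (pX p) (pZ p) (pV p) (addat (pW p) a i z)
  end.

Definition dlt (i j : nat) : Cx := if Nat.eqb i j then C1 else C0.
Definition o (a b : nat) : Cx :=
  if Nat.eqb a b then C0 else if Nat.ltb a b then C1 else Copp C1.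
Definition half : Cx := RtoC (/ 2).
Definition rowmul (n : nat) (v : nat -> Cx) (U : mat) : nat -> Cx :=
  fun j => csum n (fun m => Cmul (v m) (U m j)).
Definition mulcol (n : nat) (U : mat) (w : nat -> Cx) : nat -> Cx :=
  fun i => csum n (fun m => Cmul (U i m) (w m)).
Definition dot (n : nat) (v w : nat -> Cx) : Cx := csum n (fun m => Cmul (v m) (w m)).

(* {U_ij, W_{a,k}} and {U_ij, V_{a,l}} for U in {X, Z} *)
Definition brUW (n : nat) (U : mat) (w : nat -> Cx) (i j k : nat) : Cx :=
  Cmul half (Csub (Cmul (dlt k j) (mulcol n U w i)) (Cmul (U k j) (w i))).
Definition brUV (n : nat) (U : mat) (v : nat -> Cx) (i j l : nat) : Cx :=
  Cmul half (Csub (Cmul (rowmul n v U j) (dlt i l)) (Cmul (v j) (U i l))).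
Definition brXZ (n : nat) (p : point) (i j k l : nat) : Cx :=
  let X := pX p in let Z := pZ p in
  Cmul half (Csub (Cadd (Cadd (Cmul (mmul n Z X k j) (dlt i l))
                               (Cmul (dlt k j) (mmul n X Z i l)))
                        (Cmul (Z k j) (X i l)))
                  (Cmul (X k j) (Z i l))).
Definition brVW (n : nat) (p : point) (a j b k : nat) : Cx :=
  let V := pV p in let W := pW p in
  Cadd (Cmul (dlt a b) (Cadd (Cadd (dlt k j) (Cmul half (Cmul (W a k) (V a j))))
                             (Cmul half (Cmul (dlt k j) (dot n (V a) (W a))))))
       (Cmul half (Cmul (o a b) (Cadd (Cmul (dlt k j) (dot n (V a) (W b)))
                                      (Cmul (W b k) (V a j))))).

(* value at p of {c1, c2} for coordinate functions c1, c2 *)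
Definition br (n : nat) (p : point) (c1 c2 : coord) : Cx :=
  let X := pX p in let Z := pZ p in let V := pV p in let W := pW p in
  match c1, c2 with
  | cX i j, cX k l =>
      Cmul half (Csub (Cmul (dlt i l) (mmul n X X k j)) (Cmul (dlt k j) (mmul n X X i l)))
  | cZ i j, cZ k l =>
      Cmul half (Csub (Cmul (dlt k j) (mmul n Z Z i l)) (Cmul (dlt i l) (mmul n Z Z k j)))
  | cX i j, cZ k l => brXZ n p i j k l
  | cZ k l, cX i j => Copp (brXZ n p i j k l)
  | cX i j, cW a k => brUW n X (W a) i j k
  | cZ i j, cW a k => brUW n Z (W a) i j k
  | cW a k, cX i j => Copp (brUW n X (W a) i j k)
  | cW a k, cZ i j => Copp (brUW n Z (W a) i j k)
  | cX i j, cV a l => brUV n X (V a) i j l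
  | cZ i j, cV a l => brUV n Z (V a) i j l
  | cV a l, cX i j => Copp (brUV n X (V a) i j l)
  | cV a l, cZ i j => Copp (brUV n Z (V a) i j l)
  | cV a j, cV b l =>
      Cmul half (Cmul (o b a) (Cadd (Cmul (V b j) (V a l)) (Cmul (V a j) (V b l))))
  | cW a i, cW b k =>
      Cmul half (Cmul (o b a) (Cadd (Cmul (W b k) (W a i)) (Cmul (W a k) (W b i))))
  | cV a j, cW b k => brVW n p a j b k
  | cW b k, cV a j => Copp (brVW n p a j b k)
  end.

Definition S_mat (n : nat) (alpha : nat) (p : point) : mat :=
  mmul n (mprod_down n (IWV p) (S alpha)) (pZ p).
Definition Ham (n alpha k : nat) (p : point) : Cx :=
  Cmul (RtoC (/ INR k)) (mtr n (mpow n (S_mat n alpha p) k)).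

Definition flow (n alpha k : nat) (p : point) (t : Cx) : point :=
  let Sk := mpow n (S_mat n alpha p) k in
  let Ep := mexp n (mscale t Sk) in
  let Em := mexp n (mscale (Copp t) Sk) in
  mkPt (mmul n (pX p) Em)
       (mmul n (mmul n Ep (pZ p)) Em)
       (fun b => if Nat.leb b alpha then rowmul n (pV p b) Em else pV p b)
       (fun b => if Nat.leb b alpha then mulcol n Ep (pW p b) else pW p b).

(* Write E(t) = exp(t S^k), where S = S_alpha = (1 + W_alpha V_alpha) ... (1 + W_1 V_1) Z
   is evaluated at the initial point.

   Writing S = P Z with P the product of the factors
      1 + W_b V_b, a first-order change of one coordinate changes S linearly, and
      d/dz (1/k) tr (S + zE)^k = tr (S^(k-1) E).  This gives the explicit gradient
      [gradH]; its components along V_a and W_a are expressed through the matrices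
      G_a = P_<a Z S^(k-1) P_>a, where P_<a and P_>a are the products of the
      factors below and above a.
   3. The Hamiltonian vector field sum_c dH(c) {c, -} in coordinates.  Its
      evaluation rests on the telescoping identity
      sum_a (g_a V_a - W_a h_a) = Z S^(k-1) P - P Z S^(k-1), where g_a = G_a W_a and
      h_a = V_a G_a; the result is  dX = -X S^k,  dZ = [S^k, Z],
      dV_b = -V_b S^k and dW_b = S^k W_b for b <= alpha, and 0 for b > alpha.
   4. The flow.  Along the claimed curve S(t) = E(t) S E(-t), so S^k is constant and
      the derivative of the curve, computed from E' = S^k E, is exactly that vector
      field.  The curve starts at the initial point, and it stays in M^x because
      conjugation preserves invertibility and the moment-map equation. *)

From Stdlib Require Import Reals List Arith Lra Lia Ring Field Setoid Morphisms FunctionalExtensionality ClassicalEpsilon.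
Open Scope R_scope.

(** * Complex arithmetic *)

Lemma Cx_ext : forall a b : Cx, Re a = Re b -> Im a = Im b -> a = b.
Proof. intros [a1 a2] [b1 b2]; simpl; intros; subst; reflexivity. Qed.

Ltac cxe := apply Cx_ext; simpl.

Lemma Cring : ring_theory C0 C1 Cadd Cmul Csub Copp (@eq Cx).
Proof. constructor; intros; unfold Csub; cxe; ring. Qed.
Add Ring Cring : Cring.

Lemma C1_neq_C0 : C1 <> C0.
Proof. intro H. injection H. lra. Qed.

Lemma Cnorm2_pos : forall a, a <> C0 -> Cnorm2 a > 0.
Proof.
  intros [x y] H. unfold Cnorm2; simpl.
  destruct (Req_dec x 0); destruct (Req_dec y 0); subst; [|nra|nra|nra].
  exfalso; apply H; reflexivity.
Qed.

Lemma Cfield : field_theory C0 C1 Cadd Cmul Csub Copp Cdiv Cinv (@eq Cx).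
Proof.
  constructor; [exact Cring | exact C1_neq_C0 | reflexivity |].
  intros p Hp. pose proof (Cnorm2_pos p Hp). destruct p as [x y].
  unfold Cnorm2 in *; simpl in *. unfold Cinv, Cnorm2; simpl.
  cxe; field; lra.
Qed.
Add Field Cfield : Cfield.

Lemma two_neq0 : Cadd C1 C1 <> C0.
Proof. intro H; injection H; lra. Qed.

Lemma half_eq : half = Cinv (Cadd C1 C1).
Proof. unfold half, RtoC. cxe; unfold Cnorm2; simpl; field. Qed.

Lemma Copp_Copp : forall t, Copp (Copp t) = t.
Proof. intros; ring. Qed.

Lemma RtoC_add : forall a b, RtoC (a + b) = Cadd (RtoC a) (RtoC b).
Proof. intros; unfold RtoC; cxe; ring. Qed.

Lemma RtoC_1 : RtoC 1 = C1.
Proof. reflexivity. Qed.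

(** * Finite sums and the Kronecker delta *)

Lemma csum_ext : forall m f g, (forall i, (i < m)%nat -> f i = g i) -> csum m f = csum m g.
Proof.
  induction m; intros f g H; simpl; [reflexivity|].
  rewrite (IHm f g) by (intros; apply H; lia). rewrite (H m) by lia. reflexivity.
Qed.

Lemma csum_add : forall m f g, csum m (fun i => Cadd (f i) (g i)) = Cadd (csum m f) (csum m g).
Proof. induction m; intros; simpl; [ring| rewrite IHm; ring]. Qed.

Lemma csum_sub : forall m f g, csum m (fun i => Csub (f i) (g i)) = Csub (csum m f) (csum m g).
Proof. induction m; intros; simpl; [ring| rewrite IHm; ring]. Qed.

Lemma csum_opp : forall m f, csum m (fun i => Copp (f i)) = Copp (csum m f).
Proof. induction m; intros; simpl; [ring| rewrite IHm; ring]. Qed.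

Lemma csum_scal_l : forall m c f, csum m (fun i => Cmul c (f i)) = Cmul c (csum m f).
Proof. induction m; intros; simpl; [ring| rewrite IHm; ring]. Qed.

Lemma csum_scal_r : forall m c f, csum m (fun i => Cmul (f i) c) = Cmul (csum m f) c.
Proof. induction m; intros; simpl; [ring| rewrite IHm; ring]. Qed.

Lemma csum_zero : forall m, csum m (fun _ => C0) = C0.
Proof. induction m; simpl; [|rewrite IHm]; ring. Qed.

Lemma csum_zero' : forall m f, (forall i, (i < m)%nat -> f i = C0) -> csum m f = C0.
Proof. intros. rewrite (csum_ext m f (fun _ => C0)) by auto. apply csum_zero. Qed.

Lemma csum_swap : forall m p f,
  csum m (fun i => csum p (fun j => f i j)) = csum p (fun j => csum m (fun i => f i j)).
Proof.
  induction m; intros; simpl.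
  - symmetry; apply csum_zero.
  - rewrite IHm. rewrite <- csum_add. reflexivity.
Qed.

Lemma csum_S_l : forall m f, csum (S m) f = Cadd (f O) (csum m (fun i => f (S i))).
Proof. induction m; intros; simpl in *; [ring|]. rewrite IHm. simpl. ring. Qed.

Lemma csum_plus : forall m p f, csum (m + p) f = Cadd (csum m f) (csum p (fun i => f (m + i)%nat)).
Proof.
  intros m p; revert m; induction p; intros; simpl.
  - rewrite Nat.add_0_r; ring.
  - rewrite Nat.add_succ_r; simpl. rewrite IHp. ring.
Qed.

Lemma csum_shift_zero : forall m p f, (forall a, (m <= a)%nat -> f a = C0) -> (m <= p)%nat ->
  csum p f = csum m f.
Proof.
  intros. replace p with (m + (p - m))%nat by lia. rewrite csum_plus.
  rewrite (csum_zero' (p - m)); [ring|]. intros; apply H; lia.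
Qed.

Lemma csum_telescope : forall m f, csum m (fun a => Csub (f a) (f (S a))) = Csub (f O) (f m).
Proof. induction m; intros; simpl; [ring| rewrite IHm; ring]. Qed.

Lemma dlt_eq : forall i, dlt i i = C1.
Proof. intros; unfold dlt; rewrite Nat.eqb_refl; auto. Qed.
Lemma dlt_neq : forall i j, i <> j -> dlt i j = C0.
Proof. intros; unfold dlt; destruct (Nat.eqb_spec i j); [contradiction|auto]. Qed.
Lemma dlt_sym : forall i j, dlt i j = dlt j i.
Proof. intros; unfold dlt; rewrite Nat.eqb_sym; auto. Qed.

Lemma csum_delta : forall m i f, (i < m)%nat -> csum m (fun l => Cmul (dlt i l) (f l)) = f i.
Proof.
  induction m; intros; [lia|]. simpl.
  destruct (Nat.eq_dec i m).
  - subst. rewrite csum_zero'; [rewrite dlt_eq; ring|].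
    intros; rewrite dlt_neq by lia; ring.
  - rewrite IHm by lia. rewrite dlt_neq by lia; ring.
Qed.

Lemma csum_delta_r : forall m i f, (i < m)%nat -> csum m (fun l => Cmul (f l) (dlt l i)) = f i.
Proof.
  intros. rewrite <- (csum_delta m i f) by auto. apply csum_ext; intros.
  rewrite dlt_sym; ring.
Qed.

Lemma csum_delta_mid : forall n (g : nat -> Cx) k c, (k < n)%nat ->
  csum n (fun j => Cmul (g j) (Cmul (dlt k j) c)) = Cmul (g k) c.
Proof.
  intros. rewrite (csum_ext n _ (fun j => Cmul (dlt k j) (Cmul (g j) c))) by (intros; ring).
  apply (csum_delta n k (fun j => Cmul (g j) c)); auto.
Qed.

Lemma clsum_app : forall {X} (l1 l2 : list X) f, clsum (l1 ++ l2) f = Cadd (clsum l1 f) (clsum l2 f).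
Proof. induction l1; intros; simpl; [ring| rewrite IHl1; ring]. Qed.

Lemma clsum_map : forall {X Y} (g : X -> Y) l f, clsum (map g l) f = clsum l (fun x => f (g x)).
Proof. induction l; intros; simpl; [auto| rewrite IHl; auto]. Qed.

Lemma clsum_prod : forall {X Y} (l1 : list X) (l2 : list Y) f,
  clsum (list_prod l1 l2) f = clsum l1 (fun x => clsum l2 (fun y => f (x, y))).
Proof. induction l1; intros; simpl; [auto|]. rewrite clsum_app, clsum_map, IHl1. reflexivity. Qed.

Lemma clsum_seq : forall m f, clsum (seq 0 m) f = csum m f.
Proof. induction m; intros; [reflexivity|]. rewrite seq_S, clsum_app, IHm. simpl. ring. Qed.

(** * Matrices

   A matrix is a function of two indices of which only the block below [n] is
   meaningful, so equalities are stated up to [meq n] (agreement on that block),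
   which is a congruence for all matrix operations. *)

Lemma meq_refl n : Reflexive (meq n).
Proof. intros A i j _ _; reflexivity. Qed.
Lemma meq_sym n : Symmetric (meq n).
Proof. intros A B H i j Hi Hj; symmetry; auto. Qed.
Lemma meq_trans n : Transitive (meq n).
Proof. intros A B C H1 H2 i j Hi Hj; rewrite H1; auto. Qed.
Add Parametric Relation (n : nat) : mat (meq n)
  reflexivity proved by (meq_refl n) symmetry proved by (meq_sym n)
  transitivity proved by (meq_trans n) as meq_rel.

Definition mzero : mat := fun _ _ => C0.
Definition mneg (A : mat) : mat := fun i j => Copp (A i j).
Definition msub (A B : mat) : mat := fun i j => Csub (A i j) (B i j).
Definition outer (w v : nat -> Cx) : mat := fun i j => Cmul (w i) (v j).
Definition msum (m : nat) (F : nat -> mat) : mat := fun i j => csum m (fun a => F a i j).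

Add Parametric Morphism n : (mmul n) with signature meq n ==> meq n ==> meq n as mmul_mor.
Proof.
  intros A A' HA B B' HB i j Hi Hj. unfold mmul. apply csum_ext; intros.
  rewrite HA, HB; auto.
Qed.
Add Parametric Morphism n : (madd) with signature meq n ==> meq n ==> meq n as madd_mor.
Proof. intros A A' HA B B' HB i j Hi Hj. unfold madd. rewrite HA, HB; auto. Qed.
Add Parametric Morphism n c : (mscale c) with signature meq n ==> meq n as mscale_mor.
Proof. intros A A' HA i j Hi Hj. unfold mscale. rewrite HA; auto. Qed.
Add Parametric Morphism n : (mneg) with signature meq n ==> meq n as mneg_mor.
Proof. intros A A' HA i j Hi Hj. unfold mneg. rewrite HA; auto. Qed.
Add Parametric Morphism n : (msub) with signature meq n ==> meq n ==> meq n as msub_mor.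
Proof. intros A A' HA B B' HB i j Hi Hj. unfold msub. rewrite HA, HB; auto. Qed.
Add Parametric Morphism n : (mpow n) with signature meq n ==> eq ==> meq n as mpow_mor.
Proof.
  intros A B H m. induction m; simpl; [reflexivity|].
  intros i j Hi Hj. unfold mmul. apply csum_ext; intros. rewrite H, IHm; auto.
Qed.
Add Parametric Morphism n : (mtr n) with signature meq n ==> eq as mtr_mor.
Proof. intros A B H. unfold mtr. apply csum_ext; intros. apply H; auto. Qed.

Lemma mmul_assoc : forall n A B C, mmul n (mmul n A B) C = mmul n A (mmul n B C).
Proof.
  intros. extensionality i; extensionality j. unfold mmul.
  transitivity (csum n (fun l => csum n (fun m => Cmul (Cmul (A i m) (B m l)) (C l j)))).
  { apply csum_ext; intros. rewrite csum_scal_r. reflexivity. }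
  rewrite csum_swap. apply csum_ext; intros. rewrite <- csum_scal_l.
  apply csum_ext; intros. ring.
Qed.

Lemma mmul_id_l : forall n A, meq n (mmul n mId A) A.
Proof. intros n A i j Hi Hj. unfold mmul. apply (csum_delta n i (fun l => A l j) Hi). Qed.
Lemma mmul_id_r : forall n A, meq n (mmul n A mId) A.
Proof. intros n A i j Hi Hj. unfold mmul. exact (csum_delta_r n j (fun l => A i l) Hj). Qed.

Lemma mmul_madd_l : forall n A B C, mmul n (madd A B) C = madd (mmul n A C) (mmul n B C).
Proof. intros; extensionality i; extensionality j; unfold mmul, madd. rewrite <- csum_add. apply csum_ext; intros; ring. Qed.
Lemma mmul_madd_r : forall n A B C, mmul n A (madd B C) = madd (mmul n A B) (mmul n A C).
Proof. intros; extensionality i; extensionality j; unfold mmul, madd. rewrite <- csum_add. apply csum_ext; intros; ring. Qed.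
Lemma mmul_mscale_l : forall n c A B, mmul n (mscale c A) B = mscale c (mmul n A B).
Proof. intros; extensionality i; extensionality j; unfold mmul, mscale. rewrite <- csum_scal_l. apply csum_ext; intros; ring. Qed.
Lemma mmul_mscale_r : forall n c A B, mmul n A (mscale c B) = mscale c (mmul n A B).
Proof. intros; extensionality i; extensionality j; unfold mmul, mscale. rewrite <- csum_scal_l. apply csum_ext; intros; ring. Qed.
Lemma mmul_mneg_r : forall n A B, mmul n A (mneg B) = mneg (mmul n A B).
Proof. intros; extensionality i; extensionality j; unfold mmul, mneg. rewrite <- csum_opp. apply csum_ext; intros; ring. Qed.
Lemma mmul_zero_l : forall n A, mmul n mzero A = mzero.
Proof. intros; extensionality i; extensionality j; unfold mmul, mzero. apply csum_zero'; intros; ring. Qed.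
Lemma mmul_zero_r : forall n A, mmul n A mzero = mzero.
Proof. intros; extensionality i; extensionality j; unfold mmul, mzero. apply csum_zero'; intros; ring. Qed.
Lemma madd_zero_r : forall A, madd A mzero = A.
Proof. intros; extensionality i; extensionality j; unfold madd, mzero; ring. Qed.

Lemma mmul_sub_entry_l : forall n A B M i j,
  Csub (mmul n A M i j) (mmul n B M i j) = csum n (fun m => Cmul (Csub (A i m) (B i m)) (M m j)).
Proof. intros. unfold mmul. rewrite <- csum_sub. apply csum_ext; intros; ring. Qed.
Lemma mmul_sub_entry_r : forall n A B M i j,
  Csub (mmul n M A i j) (mmul n M B i j) = csum n (fun m => Cmul (M i m) (Csub (A m j) (B m j))).
Proof. intros. unfold mmul. rewrite <- csum_sub. apply csum_ext; intros; ring. Qed.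

Lemma mpow_comm_gen : forall n A B m, meq n (mmul n B A) (mmul n A B) ->
  meq n (mmul n B (mpow n A m)) (mmul n (mpow n A m) B).
Proof.
  intros n A B m H. induction m; simpl.
  - rewrite mmul_id_l, mmul_id_r. reflexivity.
  - rewrite <- mmul_assoc. rewrite H. rewrite mmul_assoc. rewrite IHm. rewrite mmul_assoc. reflexivity.
Qed.

Lemma mpow_comm : forall n A m, meq n (mmul n A (mpow n A m)) (mmul n (mpow n A m) A).
Proof. intros. apply mpow_comm_gen. reflexivity. Qed.

Lemma mpow_S_r : forall n Q m, meq n (mpow n Q (S m)) (mmul n (mpow n Q m) Q).
Proof. intros. simpl. apply mpow_comm. Qed.

Lemma mpow_mscale : forall n s A m, mpow n (mscale s A) m = mscale (Cpow s m) (mpow n A m).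
Proof.
  intros n s A m. induction m; simpl.
  - extensionality i; extensionality j; unfold mscale; simpl; ring.
  - rewrite IHm. rewrite mmul_mscale_l, mmul_mscale_r.
    extensionality i; extensionality j; unfold mscale; ring.
Qed.

Lemma mtr_comm : forall n A B, mtr n (mmul n A B) = mtr n (mmul n B A).
Proof. intros. unfold mtr, mmul. rewrite csum_swap. apply csum_ext; intros. apply csum_ext; intros. ring. Qed.

Lemma mtr_add : forall n A B, mtr n (madd A B) = Cadd (mtr n A) (mtr n B).
Proof. intros. unfold mtr, madd. apply csum_add. Qed.

Lemma mtr_zero : forall n, mtr n mzero = C0.
Proof. intros. unfold mtr, mzero. apply csum_zero. Qed.

Lemma mtr_cyc3 : forall n T Q O P Z,
  mtr n (mmul n T (mmul n (mmul n (mmul n Q O) P) Z)) = mtr n (mmul n O (mmul n (mmul n (mmul n P Z) T) Q)).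
Proof. intros. rewrite mtr_comm. rewrite !mmul_assoc. rewrite mtr_comm. rewrite !mmul_assoc. reflexivity. Qed.

Lemma rowmul_mmul : forall n v A B l, rowmul n v (mmul n A B) l = rowmul n (rowmul n v A) B l.
Proof.
  intros. unfold rowmul, mmul.
  rewrite (csum_ext n _ (fun m => csum n (fun r => Cmul (Cmul (v m) (A m r)) (B r l)))).
  - rewrite csum_swap. apply csum_ext; intros. rewrite csum_scal_r. reflexivity.
  - intros. rewrite <- csum_scal_l. apply csum_ext; intros; ring.
Qed.
Lemma mulcol_mmul : forall n w A B k, mulcol n (mmul n A B) w k = mulcol n A (mulcol n B w) k.
Proof.
  intros. unfold mulcol, mmul.
  rewrite (csum_ext n _ (fun m => csum n (fun r => Cmul (A k r) (Cmul (B r m) (w m))))).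
  - rewrite csum_swap. apply csum_ext; intros. rewrite csum_scal_l. reflexivity.
  - intros. rewrite <- csum_scal_r. apply csum_ext; intros; ring.
Qed.
Lemma rowmul_meq : forall n v A B l, meq n A B -> (l < n)%nat -> rowmul n v A l = rowmul n v B l.
Proof. intros. unfold rowmul. apply csum_ext; intros. rewrite H; auto. Qed.
Lemma mulcol_meq : forall n w A B k, meq n A B -> (k < n)%nat -> mulcol n A w k = mulcol n B w k.
Proof. intros. unfold mulcol. apply csum_ext; intros. rewrite H; auto. Qed.
Lemma rowmul_msub : forall n v A B l, rowmul n v (msub A B) l = Csub (rowmul n v A l) (rowmul n v B l).
Proof. intros. unfold rowmul, msub. rewrite <- csum_sub. apply csum_ext; intros; ring. Qed.
Lemma mulcol_msub : forall n w A B k, mulcol n (msub A B) w k = Csub (mulcol n A w k) (mulcol n B w k).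
Proof. intros. unfold mulcol, msub. rewrite <- csum_sub. apply csum_ext; intros; ring. Qed.
Lemma rowmul_mneg : forall n v A l, rowmul n v (mneg A) l = Copp (rowmul n v A l).
Proof. intros. unfold rowmul, mneg. rewrite <- csum_opp. apply csum_ext; intros; ring. Qed.
Lemma mulcol_mneg : forall n w A k, mulcol n (mneg A) w k = Copp (mulcol n A w k).
Proof. intros. unfold mulcol, mneg. rewrite <- csum_opp. apply csum_ext; intros; ring. Qed.
Lemma rowmul_madd : forall n v A B l, rowmul n v (madd A B) l = Cadd (rowmul n v A l) (rowmul n v B l).
Proof. intros. unfold rowmul, madd. rewrite <- csum_add. apply csum_ext; intros; ring. Qed.
Lemma mulcol_madd : forall n w A B k, mulcol n (madd A B) w k = Cadd (mulcol n A w k) (mulcol n B w k).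
Proof. intros. unfold mulcol, madd. rewrite <- csum_add. apply csum_ext; intros; ring. Qed.
Lemma rowmul_id : forall n v l, (l < n)%nat -> rowmul n v mId l = v l.
Proof. intros. unfold rowmul, mId. apply (csum_delta_r n l v); auto. Qed.
Lemma mulcol_id : forall n w k, (k < n)%nat -> mulcol n mId w k = w k.
Proof. intros. unfold mulcol, mId. apply (csum_delta n k w); auto. Qed.
Lemma rowmul_outer : forall n v w u l, rowmul n v (outer w u) l = Cmul (dot n v w) (u l).
Proof. intros. unfold rowmul, outer, dot. rewrite <- csum_scal_r. apply csum_ext; intros; ring. Qed.
Lemma mulcol_outer : forall n w u x k, mulcol n (outer w u) x k = Cmul (w k) (dot n u x).
Proof. intros. unfold mulcol, outer, dot. rewrite <- csum_scal_l. apply csum_ext; intros; ring. Qed.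

Lemma outer_mmul_l : forall n w v M, meq n (mmul n (outer w v) M) (outer w (rowmul n v M)).
Proof. intros n w v M i j Hi Hj. unfold mmul, outer, rowmul. rewrite <- csum_scal_l. apply csum_ext; intros; ring. Qed.
Lemma outer_mmul_r : forall n w v M, meq n (mmul n M (outer w v)) (outer (mulcol n M w) v).
Proof. intros n w v M i j Hi Hj. unfold mmul, outer, mulcol. rewrite <- csum_scal_r. apply csum_ext; intros; ring. Qed.

Lemma mtr_outer : forall n w u M, mtr n (mmul n (outer w u) M) = csum n (fun r => Cmul (w r) (rowmul n u M r)).
Proof. intros. unfold mtr, mmul, outer, rowmul. apply csum_ext; intros. rewrite <- csum_scal_l. apply csum_ext; intros; ring. Qed.

Lemma msum_outer_mmul_r : forall n d (w v : nat -> nat -> Cx) M i j,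
  mmul n (msum d (fun a => outer (w a) (v a))) M i j = csum d (fun a => Cmul (w a i) (rowmul n (v a) M j)).
Proof.
  intros. unfold mmul, msum, outer, rowmul.
  rewrite (csum_ext n _ (fun m => csum d (fun a => Cmul (w a i) (Cmul (v a m) (M m j))))).
  - rewrite csum_swap. apply csum_ext; intros. rewrite <- csum_scal_l. reflexivity.
  - intros. rewrite <- csum_scal_r. apply csum_ext; intros; ring.
Qed.
Lemma msum_outer_mmul_l : forall n d (w v : nat -> nat -> Cx) M i j,
  mmul n M (msum d (fun a => outer (w a) (v a))) i j = csum d (fun a => Cmul (mulcol n M (w a) i) (v a j)).
Proof.
  intros. unfold mmul, msum, outer, mulcol.
  rewrite (csum_ext n _ (fun m => csum d (fun a => Cmul (Cmul (M i m) (w a m)) (v a j)))).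
  - rewrite csum_swap. apply csum_ext; intros. rewrite <- csum_scal_r. reflexivity.
  - intros. rewrite <- csum_scal_l. apply csum_ext; intros; ring.
Qed.

Lemma rowmul_msum_scal : forall n d v (F : nat -> mat) (c : nat -> Cx) l,
  rowmul n v (msum d (fun a => mscale (c a) (F a))) l = csum d (fun a => Cmul (c a) (rowmul n v (F a) l)).
Proof.
  intros. unfold rowmul, msum, mscale.
  rewrite (csum_ext n _ (fun m => csum d (fun a => Cmul (c a) (Cmul (v m) (F a m l))))).
  - rewrite csum_swap. apply csum_ext; intros. rewrite <- csum_scal_l. reflexivity.
  - intros. rewrite <- csum_scal_l. apply csum_ext; intros; ring.
Qed.
Lemma mulcol_msum_scal : forall n d w (F : nat -> mat) (c : nat -> Cx) k,
  mulcol n (msum d (fun a => mscale (c a) (F a))) w k = csum d (fun a => Cmul (c a) (mulcol n (F a) w k)).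
Proof.
  intros. unfold mulcol, msum, mscale.
  rewrite (csum_ext n _ (fun m => csum d (fun a => Cmul (c a) (Cmul (F a k m) (w m))))).
  - rewrite csum_swap. apply csum_ext; intros. rewrite <- csum_scal_l. reflexivity.
  - intros. rewrite <- csum_scal_r. apply csum_ext; intros; ring.
Qed.

Lemma is_inverse_meq : forall n A A' B B', meq n A A' -> meq n B B' -> is_inverse n A B -> is_inverse n A' B'.
Proof. intros n A A' B B' HA HB [H1 H2]. split; [rewrite <- HA, <- HB; auto| rewrite <- HA, <- HB; auto]. Qed.

Lemma inverse_unique : forall n A B B', is_inverse n A B -> is_inverse n A B' -> meq n B B'.
Proof.
  intros n A B B' [H1 H2] [H3 H4].
  rewrite <- (mmul_id_r n B). rewrite <- H3. rewrite <- mmul_assoc. rewrite H2. apply mmul_id_l.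
Qed.

Lemma minv_spec : forall n A, invertible n A -> is_inverse n A (minv n A).
Proof. intros. unfold minv. apply epsilon_spec. exact H. Qed.

Lemma minv_meq : forall n A B, invertible n A -> is_inverse n A B -> meq n (minv n A) B.
Proof. intros. apply (inverse_unique n A); auto. apply minv_spec; auto. Qed.

Lemma inverse_mul : forall n A Ai B Bi, is_inverse n A Ai -> is_inverse n B Bi ->
  is_inverse n (mmul n A B) (mmul n Bi Ai).
Proof.
  intros n A Ai B Bi [H1 H2] [H3 H4]. split.
  - rewrite mmul_assoc. rewrite <- (mmul_assoc n B Bi). rewrite H3. rewrite mmul_id_l. auto.
  - rewrite mmul_assoc. rewrite <- (mmul_assoc n Ai A). rewrite H2. rewrite mmul_id_l. auto.
Qed.

Lemma inverse_id : forall n, is_inverse n mId mId.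
Proof. intros; split; apply mmul_id_l. Qed.

Lemma conj_inverse : forall n E F M Mi, meq n (mmul n E F) mId -> meq n (mmul n F E) mId ->
  is_inverse n M Mi -> is_inverse n (mmul n (mmul n E M) F) (mmul n E (mmul n Mi F)).
Proof.
  intros n E F M Mi HEF HFE HM.
  assert (H1 : is_inverse n (mmul n E M) (mmul n Mi F)) by (apply inverse_mul; auto; split; auto).
  apply inverse_mul; auto. split; auto.
Qed.

Lemma cancel_l : forall n E F M, meq n (mmul n F E) mId -> meq n (mmul n F (mmul n E M)) M.
Proof. intros. rewrite <- mmul_assoc. rewrite H. apply mmul_id_l. Qed.

Lemma comm_inverse : forall n E S Si, is_inverse n S Si -> meq n (mmul n E S) (mmul n S E) ->
  meq n (mmul n E Si) (mmul n Si E).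
Proof.
  intros n E S Si [H1 H2] HC.
  transitivity (mmul n (mmul n Si S) (mmul n E Si)).
  { rewrite H2. rewrite mmul_id_l. reflexivity. }
  rewrite mmul_assoc. rewrite <- (mmul_assoc n S E Si). rewrite <- HC.
  rewrite (mmul_assoc n E S Si). rewrite H1. rewrite mmul_id_r. reflexivity.
Qed.

Lemma mprod_down_ext : forall n f g q, (forall m, (m < q)%nat -> f m = g m) -> mprod_down n f q = mprod_down n g q.
Proof. induction q; intros; simpl; auto. rewrite IHq by (intros; apply H; lia). rewrite H by lia; auto. Qed.

Lemma mprod_down_ext_meq : forall n f g q, (forall m, (m < q)%nat -> meq n (f m) (g m)) ->
  meq n (mprod_down n f q) (mprod_down n g q).
Proof. induction q; intros; simpl; [reflexivity|]. rewrite IHq by (intros; apply H; lia). rewrite H by lia; reflexivity. Qed.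

Lemma mprod_up_ext_meq : forall n f g q, (forall m, (m < q)%nat -> meq n (f m) (g m)) ->
  meq n (mprod_up n f q) (mprod_up n g q).
Proof. induction q; intros; simpl; [reflexivity|]. rewrite IHq by (intros; apply H; lia). rewrite H by lia; reflexivity. Qed.

Lemma mprod_down_split : forall n f p q,
  meq n (mprod_down n f (p + q)) (mmul n (mprod_down n (fun m => f (p + m)%nat) q) (mprod_down n f p)).
Proof.
  intros n f p q. induction q; simpl.
  - rewrite Nat.add_0_r. rewrite mmul_id_l. reflexivity.
  - rewrite Nat.add_succ_r. simpl. rewrite IHq. rewrite mmul_assoc. reflexivity.
Qed.

Lemma mprod_down_peel : forall n f q,
  meq n (mprod_down n f (S q)) (mmul n (mprod_down n (fun m => f (S m)) q) (f O)).
Proof. intros. pose proof (mprod_down_split n f 1 q). simpl in H. rewrite H. rewrite mmul_id_r. reflexivity. Qed.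

Lemma mprod_up_split : forall n f p q,
  meq n (mprod_up n f (p + q)) (mmul n (mprod_up n f p) (mprod_up n (fun m => f (p + m)%nat) q)).
Proof.
  intros n f p q. induction q; simpl.
  - rewrite Nat.add_0_r. rewrite mmul_id_r. reflexivity.
  - rewrite Nat.add_succ_r. simpl. rewrite IHq. rewrite mmul_assoc. reflexivity.
Qed.

Lemma mprod_inverse : forall n (f g : nat -> mat) q, (forall m, (m < q)%nat -> is_inverse n (f m) (g m)) ->
  is_inverse n (mprod_down n f q) (mprod_up n g q).
Proof. induction q; intros; simpl; [apply inverse_id| apply inverse_mul; auto]. Qed.

Lemma mprod_down_conj : forall n (f f' : nat -> mat) E F q,
  meq n (mmul n E F) mId -> meq n (mmul n F E) mId ->
  (forall m, (m < q)%nat -> meq n (f' m) (mmul n (mmul n E (f m)) F)) ->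
  meq n (mprod_down n f' q) (mmul n (mmul n E (mprod_down n f q)) F).
Proof.
  intros n f f' E F q HEF HFE Hf. induction q; simpl.
  - rewrite mmul_id_r. symmetry; auto.
  - rewrite IHq by (intros; apply Hf; lia). rewrite Hf by lia.
    rewrite !mmul_assoc. rewrite <- (mmul_assoc n F E). rewrite HFE. rewrite mmul_id_l. reflexivity.
Qed.

Lemma mprod_up_conj : forall n (f f' : nat -> mat) E F q,
  meq n (mmul n E F) mId -> meq n (mmul n F E) mId ->
  (forall m, (m < q)%nat -> meq n (f' m) (mmul n (mmul n E (f m)) F)) ->
  meq n (mprod_up n f' q) (mmul n (mmul n E (mprod_up n f q)) F).
Proof.
  intros n f f' E F q HEF HFE Hf. induction q; simpl.
  - rewrite mmul_id_r. symmetry; auto.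
  - rewrite IHq by (intros; apply Hf; lia). rewrite Hf by lia.
    rewrite !mmul_assoc. rewrite <- (mmul_assoc n F E). rewrite HFE. rewrite mmul_id_l. reflexivity.
Qed.

Lemma mpow_conj : forall n A E F m,
  meq n (mmul n E F) mId -> meq n (mmul n F E) mId ->
  meq n (mpow n (mmul n (mmul n E A) F) m) (mmul n (mmul n E (mpow n A m)) F).
Proof.
  intros n A E F m HEF HFE. induction m; simpl.
  - rewrite mmul_id_r. symmetry; auto.
  - rewrite IHm. rewrite !mmul_assoc. rewrite <- (mmul_assoc n F E). rewrite HFE. rewrite mmul_id_l. reflexivity.
Qed.

Lemma Cnorm2_ge0 : forall a, 0 <= Cnorm2 a.
Proof. intros [x y]; unfold Cnorm2; simpl; nra. Qed.

Lemma Cmod_ge0 : forall a, 0 <= Cmod a.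
Proof. intros; unfold Cmod; apply sqrt_pos. Qed.

Lemma Cmod_sq : forall a, Cmod a * Cmod a = Cnorm2 a.
Proof. intros; unfold Cmod; apply sqrt_sqrt, Cnorm2_ge0. Qed.

Lemma Cmod_mul : forall a b, Cmod (Cmul a b) = Cmod a * Cmod b.
Proof.
  intros. unfold Cmod. rewrite <- sqrt_mult by apply Cnorm2_ge0. f_equal.
  destruct a, b; unfold Cnorm2; simpl; ring.
Qed.

Lemma Re_le_Cmod : forall a, Rabs (Re a) <= Cmod a.
Proof.
  intros [x y]; unfold Cmod, Cnorm2; simpl.
  rewrite <- sqrt_Rsqr_abs. apply sqrt_le_1_alt. unfold Rsqr; nra.
Qed.
Lemma Im_le_Cmod : forall a, Rabs (Im a) <= Cmod a.
Proof.
  intros [x y]; unfold Cmod, Cnorm2; simpl.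
  rewrite <- sqrt_Rsqr_abs. apply sqrt_le_1_alt. unfold Rsqr; nra.
Qed.

Lemma Cmod_le_sum : forall a, Cmod a <= Rabs (Re a) + Rabs (Im a).
Proof.
  intros [x y]; unfold Cmod, Cnorm2; simpl.
  pose proof (Rabs_pos x); pose proof (Rabs_pos y).
  apply Rsqr_incr_0_var; [|lra].
  rewrite Rsqr_sqrt by nra.
  pose proof (Rsqr_abs x); pose proof (Rsqr_abs y). unfold Rsqr in *. nra.
Qed.

Lemma CS_ineq : forall x y u v, x * u + y * v <= sqrt ((x*x+y*y)*(u*u+v*v)).
Proof.
  intros. destruct (Rle_dec (x*u+y*v) 0).
  - pose proof (sqrt_pos ((x*x+y*y)*(u*u+v*v))); lra.
  - rewrite <- (sqrt_square (x*u+y*v)) by lra. apply sqrt_le_1_alt.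
    pose proof (Rle_0_sqr (x*v-y*u)); unfold Rsqr in *; nra.
Qed.

Lemma Cmod_triangle : forall a b, Cmod (Cadd a b) <= Cmod a + Cmod b.
Proof.
  intros. apply Rsqr_incr_0_var; [| pose proof (Cmod_ge0 a); pose proof (Cmod_ge0 b); lra].
  unfold Rsqr. rewrite Cmod_sq.
  replace ((Cmod a + Cmod b) * (Cmod a + Cmod b)) with
    (Cmod a * Cmod a + Cmod b * Cmod b + 2 * (Cmod a * Cmod b)) by ring.
  rewrite !Cmod_sq.
  assert (Re a * Re b + Im a * Im b <= Cmod a * Cmod b).
  { unfold Cmod. rewrite <- sqrt_mult by apply Cnorm2_ge0. unfold Cnorm2. apply CS_ineq. }
  destruct a as [x y], b as [u v]; unfold Cnorm2 in *; simpl in *. nra.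
Qed.

Lemma Cmod_opp : forall a, Cmod (Copp a) = Cmod a.
Proof. intros [x y]; unfold Cmod, Cnorm2; simpl; f_equal; ring. Qed.

Lemma Cmod_sub_sym : forall a b, Cmod (Csub a b) = Cmod (Csub b a).
Proof. intros. replace (Csub a b) with (Copp (Csub b a)) by ring. apply Cmod_opp. Qed.

Lemma Cmod_sub_tri : forall a b c, Cmod (Csub a c) <= Cmod (Csub a b) + Cmod (Csub b c).
Proof. intros. replace (Csub a c) with (Cadd (Csub a b) (Csub b c)) by ring. apply Cmod_triangle. Qed.

Lemma Cmod_C0 : Cmod C0 = 0.
Proof. unfold Cmod, Cnorm2; simpl. replace (0*0+0*0) with 0 by ring. apply sqrt_0. Qed.

Lemma Cmod_C1 : Cmod C1 = 1.
Proof. unfold Cmod, Cnorm2; simpl. replace (1*1+0*0) with 1 by ring. apply sqrt_1. Qed.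

Lemma Cmod_RtoC : forall r, Cmod (RtoC r) = Rabs r.
Proof. intros; unfold Cmod, Cnorm2, RtoC; simpl. rewrite <- sqrt_Rsqr_abs. f_equal. unfold Rsqr; ring. Qed.

Lemma Cmod_pow : forall s m, Cmod (Cpow s m) = Cmod s ^ m.
Proof. induction m; simpl; [apply Cmod_C1| rewrite Cmod_mul, IHm; auto]. Qed.

Lemma Cmod_eq0 : forall a, Cmod a = 0 -> a = C0.
Proof.
  intros [x y] H. unfold Cmod, Cnorm2 in H; simpl in H.
  apply sqrt_eq_0 in H; [|nra]. cxe; nra.
Qed.

Lemma Cmod_pos : forall a, a <> C0 -> 0 < Cmod a.
Proof.
  intros a Ha. pose proof (Cmod_ge0 a).
  destruct (Req_dec (Cmod a) 0) as [H0|H0]; [apply Cmod_eq0 in H0; contradiction| lra].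
Qed.

Lemma Cmod_inv : forall a, a <> C0 -> Cmod (Cinv a) = / Cmod a.
Proof.
  intros. pose proof (Cmod_pos a H).
  apply (Rmult_eq_reg_l (Cmod a)); [| lra]. rewrite <- Cmod_mul.
  replace (Cmul a (Cinv a)) with C1 by (field; auto). rewrite Cmod_C1. field; lra.
Qed.

Lemma Cmod_div : forall a b, b <> C0 -> Cmod (Cdiv a b) = Cmod a / Cmod b.
Proof. intros. unfold Cdiv. rewrite Cmod_mul, Cmod_inv by auto. reflexivity. Qed.

(** * Real sums and convergent sequences *)

Fixpoint rsum (m : nat) (f : nat -> R) : R :=
  match m with O => 0 | S m' => rsum m' f + f m' end.

Lemma Cmod_csum : forall m f, Cmod (csum m f) <= rsum m (fun i => Cmod (f i)).
Proof.
  induction m; intros; simpl. rewrite Cmod_C0; lra.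
  eapply Rle_trans; [apply Cmod_triangle|]. specialize (IHm f). lra.
Qed.

Lemma rsum_le : forall m f g, (forall i, (i < m)%nat -> f i <= g i) -> rsum m f <= rsum m g.
Proof.
  induction m; intros; simpl; [lra|].
  pose proof (H m ltac:(lia)). pose proof (IHm f g ltac:(intros; apply H; lia)). lra.
Qed.

Lemma rsum_const : forall m c, rsum m (fun _ => c) = INR m * c.
Proof. induction m; intros; simpl; [ring|]. rewrite IHm. destruct m; simpl; ring. Qed.

Lemma rsum_ge0 : forall m f, (forall i, 0 <= f i) -> 0 <= rsum m f.
Proof. induction m; intros; simpl; [lra|]. pose proof (IHm f H); pose proof (H m); lra. Qed.

Lemma rsum_scal : forall m K f, rsum m (fun i => K * f i) = K * rsum m f.
Proof. induction m; intros; simpl; [ring| rewrite IHm; ring]. Qed.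

Lemma rsum_plus : forall m p f, rsum (m + p) f = rsum m f + rsum p (fun i => f (m + i)%nat).
Proof.
  intros m p; revert m; induction p; intros; simpl.
  - rewrite Nat.add_0_r; ring.
  - rewrite Nat.add_succ_r; simpl. rewrite IHp. ring.
Qed.

Lemma rsum_term_le : forall m f i, (forall k, 0 <= f k) -> (i < m)%nat -> f i <= rsum m f.
Proof.
  induction m; intros; [lia|]. simpl. destruct (Nat.eq_dec i m).
  - subst. pose proof (rsum_ge0 m f H). lra.
  - pose proof (IHm f i H ltac:(lia)). pose proof (H m). lra.
Qed.

Lemma rsum_growing_le : forall (f : nat -> R) L, (forall i, 0 <= f i) ->
  Un_cv (fun N => rsum N f) L -> forall N, rsum N f <= L.
Proof.
  intros. apply (growing_ineq (fun N => rsum N f)); auto.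
  intro m; simpl. specialize (H m); lra.
Qed.

Lemma Re_csum : forall m f, Re (csum m f) = rsum m (fun i => Re (f i)).
Proof. induction m; intros; simpl; [auto| rewrite IHm; auto]. Qed.
Lemma Im_csum : forall m f, Im (csum m f) = rsum m (fun i => Im (f i)).
Proof. induction m; intros; simpl; [auto| rewrite IHm; auto]. Qed.

(* Convergence of a complex sequence in modulus; [is_mexp] uses the
   equivalent componentwise form [ccv]. *)
Definition cvm (u : nat -> Cx) (l : Cx) : Prop :=
  forall eps, eps > 0 -> exists N, forall m, (m >= N)%nat -> Cmod (Csub (u m) l) < eps.
Definition ccv (u : nat -> Cx) (l : Cx) : Prop :=
  Un_cv (fun N => Re (u N)) (Re l) /\ Un_cv (fun N => Im (u N)) (Im l).

Lemma ccv_cvm : forall u l, ccv u l <-> cvm u l.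
Proof.
  intros u l; split.
  - intros [H1 H2] eps Heps.
    destruct (H1 (eps/2) ltac:(lra)) as [N1 HN1].
    destruct (H2 (eps/2) ltac:(lra)) as [N2 HN2].
    exists (max N1 N2). intros m Hm.
    eapply Rle_lt_trans; [apply Cmod_le_sum|]. simpl.
    specialize (HN1 m ltac:(lia)); specialize (HN2 m ltac:(lia)). unfold Rdist, Rminus in *.
    lra.
  - intros H; split; intros eps Heps; destruct (H eps Heps) as [N HN]; exists N; intros m Hm;
      specialize (HN m ltac:(lia)); unfold Rdist.
    + eapply Rle_lt_trans; [|apply HN]. exact (Re_le_Cmod (Csub (u m) l)).
    + eapply Rle_lt_trans; [|apply HN]. exact (Im_le_Cmod (Csub (u m) l)).
Qed.

Lemma cvm_unique : forall u l1 l2, cvm u l1 -> cvm u l2 -> l1 = l2.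
Proof.
  intros u l1 l2 H1 H2.
  enough (Hz : Csub l1 l2 = C0) by (replace l1 with (Cadd (Csub l1 l2) l2) by ring; rewrite Hz; ring).
  apply Cmod_eq0.
  pose proof (Cmod_ge0 (Csub l1 l2)).
  destruct (Req_dec (Cmod (Csub l1 l2)) 0); auto. exfalso.
  set (e := Cmod (Csub l1 l2)).
  destruct (H1 (e/2) ltac:(unfold e in *; lra)) as [N1 HN1].
  destruct (H2 (e/2) ltac:(unfold e in *; lra)) as [N2 HN2].
  specialize (HN1 (max N1 N2) ltac:(lia)); specialize (HN2 (max N1 N2) ltac:(lia)).
  pose proof (Cmod_sub_tri l1 (u (max N1 N2)) l2).
  rewrite (Cmod_sub_sym l1 (u (max N1 N2))) in H3. unfold e in *. lra.
Qed.

Lemma cvm_ext : forall u v l, (forall m, u m = v m) -> cvm u l -> cvm v l.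
Proof. intros u v l He H eps Heps. destruct (H eps Heps) as [N HN]; exists N; intros; rewrite <- He; auto. Qed.

Lemma cvm_const : forall c, cvm (fun _ => c) c.
Proof. intros c eps Heps; exists O; intros. replace (Csub c c) with C0 by ring. rewrite Cmod_C0; lra. Qed.

Lemma cvm_add : forall u v a b, cvm u a -> cvm v b -> cvm (fun m => Cadd (u m) (v m)) (Cadd a b).
Proof.
  intros u v a b Hu Hv eps Heps.
  destruct (Hu (eps/2) ltac:(lra)) as [N1 HN1]. destruct (Hv (eps/2) ltac:(lra)) as [N2 HN2].
  exists (max N1 N2); intros m Hm.
  replace (Csub (Cadd (u m) (v m)) (Cadd a b)) with (Cadd (Csub (u m) a) (Csub (v m) b)) by ring.
  eapply Rle_lt_trans; [apply Cmod_triangle|].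
  specialize (HN1 m ltac:(lia)); specialize (HN2 m ltac:(lia)); lra.
Qed.

Lemma cvm_scal : forall u a c, cvm u a -> cvm (fun m => Cmul c (u m)) (Cmul c a).
Proof.
  intros u a c Hu eps Heps.
  pose proof (Cmod_ge0 c).
  destruct (Hu (eps / (Cmod c + 1))) as [N HN]; [apply Rdiv_lt_0_compat; lra|].
  exists N; intros m Hm.
  replace (Csub (Cmul c (u m)) (Cmul c a)) with (Cmul c (Csub (u m) a)) by ring.
  rewrite Cmod_mul. specialize (HN m Hm).
  pose proof (Cmod_ge0 (Csub (u m) a)).
  apply Rle_lt_trans with ((Cmod c + 1) * Cmod (Csub (u m) a)); [nra|].
  apply (Rmult_lt_compat_l (Cmod c + 1)) in HN; [|lra].
  replace ((Cmod c + 1) * (eps / (Cmod c + 1))) with eps in HN by (field; lra). lra.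
Qed.

Lemma cvm_sub : forall u v a b, cvm u a -> cvm v b -> cvm (fun m => Csub (u m) (v m)) (Csub a b).
Proof.
  intros. unfold Csub. apply cvm_add; auto.
  apply (cvm_ext (fun m => Cmul (Copp C1) (v m))); [intros; ring|].
  replace (Copp b) with (Cmul (Copp C1) b) by ring. apply cvm_scal; auto.
Qed.

Lemma cvm_csum : forall p (u : nat -> nat -> Cx) (a : nat -> Cx),
  (forall i, (i < p)%nat -> cvm (u i) (a i)) ->
  cvm (fun m => csum p (fun i => u i m)) (csum p a).
Proof. induction p; intros; simpl; [apply cvm_const| apply cvm_add; auto]. Qed.

Lemma cvm_le : forall u l M, cvm u l -> (forall m, Cmod (u m) <= M) -> Cmod l <= M.
Proof.
  intros u l M H HM. apply Rnot_lt_le; intro Hlt.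
  destruct (H (Cmod l - M) ltac:(lra)) as [N HN].
  specialize (HN N (le_n _)). specialize (HM N).
  pose proof (Cmod_triangle (u N) (Csub l (u N))).
  replace (Cadd (u N) (Csub l (u N))) with l in H0 by ring.
  rewrite Cmod_sub_sym in HN. lra.
Qed.

Lemma cvm_shift : forall u l, cvm u l -> cvm (fun m => u (S m)) l.
Proof. intros u l H eps He; destruct (H eps He) as [N HN]; exists N; intros; apply HN; lia. Qed.

Lemma cvm_unshift : forall u l, cvm (fun m => u (S m)) l -> cvm u l.
Proof.
  intros u l H eps He; destruct (H eps He) as [N HN]; exists (S N); intros.
  destruct m; [lia|]. apply HN; lia.
Qed.

Lemma real_dom_cauchy : forall (u b : nat -> R),
  (forall m, Rabs (u m) <= b m) -> (exists L, Un_cv (fun N => rsum N b) L) ->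
  exists l, Un_cv (fun N => rsum N u) l.
Proof.
  intros u b Hub [L HL].
  assert (Hb0 : forall m, 0 <= b m) by (intros; eapply Rle_trans; [apply Rabs_pos|apply Hub]).
  assert (Hblock : forall a k, Rabs (rsum k (fun i => u (a + i)%nat)) <= rsum k (fun i => b (a + i)%nat)).
  { intros a k. induction k; simpl; [rewrite Rabs_R0; lra|].
    eapply Rle_trans; [apply Rabs_triang|]. pose proof (Hub (a + k)%nat). lra. }
  assert (Hc : Cauchy_crit (fun N => rsum N b)) by (apply CV_Cauchy; exists L; exact HL).
  assert (Hcu : Cauchy_crit (fun N => rsum N u)).
  { intros eps Heps. destruct (Hc eps Heps) as [N HN]. exists N. intros m p Hm Hp.
    unfold Rdist in *.
    assert (key : forall a c, (a >= N)%nat -> (c >= N)%nat -> (a <= c)%nat ->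
               Rabs (rsum c u - rsum a u) < eps).
    { intros a c Ha Hc' Hac. replace c with (a + (c - a))%nat by lia.
      specialize (HN (a + (c - a))%nat a ltac:(lia) Ha). rewrite !rsum_plus in *.
      replace (rsum a u + rsum (c - a) (fun i => u (a + i)%nat) - rsum a u)
        with (rsum (c - a) (fun i => u (a + i)%nat)) by ring.
      replace (rsum a b + rsum (c - a) (fun i => b (a + i)%nat) - rsum a b)
        with (rsum (c - a) (fun i => b (a + i)%nat)) in HN by ring.
      eapply Rle_lt_trans; [apply Hblock|]. eapply Rle_lt_trans; [apply Rle_abs| exact HN]. }
    destruct (le_lt_dec m p).
    - rewrite Rabs_minus_sym. apply key; lia.
    - apply key; lia. }
  destruct (R_complete _ Hcu) as [l Hl]. exists l; exact Hl.
Qed.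

Lemma dom_cv : forall (u : nat -> Cx) (b : nat -> R),
  (forall m, Cmod (u m) <= b m) -> (exists L, Un_cv (fun N => rsum N b) L) ->
  exists l, cvm (fun N => csum N u) l.
Proof.
  intros u b Hub HL.
  destruct (real_dom_cauchy (fun m => Re (u m)) b) as [lr Hr]; auto.
  { intros; eapply Rle_trans; [apply Re_le_Cmod|auto]. }
  destruct (real_dom_cauchy (fun m => Im (u m)) b) as [li Hi]; auto.
  { intros; eapply Rle_trans; [apply Im_le_Cmod|auto]. }
  exists (mkC lr li). apply ccv_cvm. split; simpl.
  - intros e He; destruct (Hr e He) as [N HN]; exists N; intros; rewrite Re_csum; auto.
  - intros e He; destruct (Hi e He) as [N HN]; exists N; intros; rewrite Im_csum; auto.
Qed.

Lemma exp_series_cv : forall x, exists L, Un_cv (fun N => rsum N (fun m => x ^ m / INR (fact m))) L.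
Proof.
  intros x. destruct (exist_exp x) as [l Hl]. exists l. unfold exp_in, infinite_sum in Hl.
  intros eps He. destruct (Hl eps He) as [N HN]. exists (S N). intros m Hm.
  destruct m; [lia|].
  assert (rsum (S m) (fun m0 => x ^ m0 / INR (fact m0)) = sum_f_R0 (fun i => / INR (fact i) * x ^ i) m).
  { clear. induction m; [simpl; unfold Rdiv; ring|].
    change (rsum (S (S m)) (fun m0 => x ^ m0 / INR (fact m0))) with
      (rsum (S m) (fun m0 => x ^ m0 / INR (fact m0)) + x ^ (S m) / INR (fact (S m))).
    rewrite IHm. change (sum_f_R0 (fun i => / INR (fact i) * x ^ i) (S m)) with
      (sum_f_R0 (fun i => / INR (fact i) * x ^ i) m + / INR (fact (S m)) * x ^ (S m)).
    unfold Rdiv; ring. }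
  rewrite H. apply HN. lia.
Qed.

Lemma Un_cv_scal : forall u l K, Un_cv u l -> Un_cv (fun N => K * u N) (K * l).
Proof.
  intros. apply (CV_mult (fun _ => K) u K l); auto.
  intros e He; exists O; intros; unfold Rdist; rewrite Rminus_diag, Rabs_R0; lra.
Qed.

(** * Complex differentiation

   [has_cderiv f t L] says that the remainder h |-> f(t+h) - f(t) - hL is small
   compared to h.  Derivative rules are obtained from closure properties of such
   "small" functions. *)

Definition remainder (f : Cx -> Cx) (t L h : Cx) : Cx := Csub (Csub (f (Cadd t h)) (f t)) (Cmul h L).

Definition small (r : Cx -> Cx) : Prop :=
  forall eps, eps > 0 -> exists delta, delta > 0 /\
    forall h, h <> C0 -> Cmod h < delta -> Cmod (r h) <= eps * Cmod h.

Lemma cderiv_small : forall f t L, has_cderiv f t L <-> small (remainder f t L).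
Proof.
  intros f t L; unfold remainder; split.
  - intros H eps He. destruct (H eps He) as [d [Hd Hh]]. exists d; split; auto.
    intros h Hh0 Hhd. specialize (Hh h Hh0 Hhd). pose proof (Cmod_pos h Hh0).
    replace (Csub (Csub (f (Cadd t h)) (f t)) (Cmul h L)) with
      (Cmul h (Csub (Cdiv (Csub (f (Cadd t h)) (f t)) h) L)) by (field; auto).
    rewrite Cmod_mul. nra.
  - intros H eps He. destruct (H (eps/2) ltac:(lra)) as [d [Hd Hh]]. exists d; split; auto.
    intros h Hh0 Hhd. specialize (Hh h Hh0 Hhd). pose proof (Cmod_pos h Hh0).
    replace (Csub (Cdiv (Csub (f (Cadd t h)) (f t)) h) L) with
      (Cdiv (Csub (Csub (f (Cadd t h)) (f t)) (Cmul h L)) h) by (field; auto).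
    rewrite Cmod_div by auto. apply (Rmult_lt_reg_r (Cmod h)); auto.
    unfold Rdiv; rewrite Rmult_assoc, Rinv_l by lra. nra.
Qed.

Lemma small_ext : forall r s, (forall h, r h = s h) -> small r -> small s.
Proof. intros r s E H eps He. destruct (H eps He) as [d [Hd Hh]]. exists d; split; auto. intros; rewrite <- E; auto. Qed.

Lemma small_add : forall r s, small r -> small s -> small (fun h => Cadd (r h) (s h)).
Proof.
  intros r s Hr Hs eps He.
  destruct (Hr (eps/2) ltac:(lra)) as [d1 [Hd1 H1]]. destruct (Hs (eps/2) ltac:(lra)) as [d2 [Hd2 H2]].
  exists (Rmin d1 d2); split; [apply Rmin_pos; auto|]. intros h Hh0 Hhd.
  specialize (H1 h Hh0 ltac:(pose proof (Rmin_l d1 d2); lra)).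
  specialize (H2 h Hh0 ltac:(pose proof (Rmin_r d1 d2); lra)).
  eapply Rle_trans; [apply Cmod_triangle|]. lra.
Qed.

Lemma small_mul_bounded : forall r (b : Cx -> Cx) B d, small r -> d > 0 -> 0 <= B ->
  (forall h, Cmod h < d -> Cmod (b h) <= B) -> small (fun h => Cmul (r h) (b h)).
Proof.
  intros r b B d Hr Hd HB Hb eps He.
  destruct (Hr (eps / (B + 1))) as [d1 [Hd1 H1]]; [apply Rdiv_lt_0_compat; lra|].
  exists (Rmin d1 d); split; [apply Rmin_pos; auto|]. intros h Hh0 Hhd.
  specialize (H1 h Hh0 ltac:(pose proof (Rmin_l d1 d); lra)).
  specialize (Hb h ltac:(pose proof (Rmin_r d1 d); lra)).
  rewrite Cmod_mul. pose proof (Cmod_ge0 (r h)). pose proof (Cmod_ge0 h).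
  apply Rle_trans with (eps / (B + 1) * Cmod h * B); [apply Rmult_le_compat; auto; apply Cmod_ge0|].
  apply Rle_trans with (eps / (B + 1) * (B + 1) * Cmod h).
  - assert (0 <= eps / (B + 1)) by (left; apply Rdiv_lt_0_compat; lra). nra.
  - right; field; lra.
Qed.

Lemma small_quadratic : forall (r : Cx -> Cx) C d, d > 0 -> 0 <= C ->
  (forall h, Cmod h < d -> Cmod (r h) <= C * (Cmod h * Cmod h)) -> small r.
Proof.
  intros r C d Hd HC Hr eps He.
  exists (Rmin d (eps / (C + 1))); split; [apply Rmin_pos; [lra| apply Rdiv_lt_0_compat; lra]|].
  intros h Hh0 Hhd. pose proof (Rmin_l d (eps / (C + 1))). pose proof (Rmin_r d (eps / (C + 1))).
  specialize (Hr h ltac:(lra)). pose proof (Cmod_ge0 h).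
  eapply Rle_trans; [exact Hr|].
  set (e := eps / (C + 1)) in *.
  assert (Hhe : Cmod h <= e) by lra.
  apply Rle_trans with ((C + 1) * e * Cmod h).
  - apply Rle_trans with (C * (e * Cmod h)); [apply Rmult_le_compat_l; nra|nra].
  - right; unfold e; field; lra.
Qed.

Lemma cderiv_ext : forall f g t L, (forall z, f z = g z) -> has_cderiv f t L -> has_cderiv g t L.
Proof. intros. replace g with f; auto. extensionality z; auto. Qed.

Lemma cderiv_val : forall f t L L', has_cderiv f t L -> L = L' -> has_cderiv f t L'.
Proof. intros; subst; auto. Qed.

Lemma cderiv_affine : forall f t L, (forall h, remainder f t L h = C0) -> has_cderiv f t L.
Proof.
  intros f t L H. apply cderiv_small. intros eps He. exists 1; split; [lra|].
  intros h _ _. rewrite H, Cmod_C0. pose proof (Cmod_ge0 h). nra.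
Qed.

Lemma cderiv_const : forall c t, has_cderiv (fun _ => c) t C0.
Proof. intros. apply cderiv_affine. intros; unfold remainder; ring. Qed.

Lemma cderiv_id : forall t, has_cderiv (fun z => z) t C1.
Proof. intros. apply cderiv_affine. intros; unfold remainder; ring. Qed.

Lemma cderiv_add : forall f g t L M, has_cderiv f t L -> has_cderiv g t M ->
  has_cderiv (fun z => Cadd (f z) (g z)) t (Cadd L M).
Proof.
  intros f g t L M Hf Hg. apply cderiv_small in Hf, Hg. apply cderiv_small.
  eapply small_ext; [|apply (small_add _ _ Hf Hg)]. intros; unfold remainder; ring.
Qed.

Lemma cderiv_scal : forall f c t L, has_cderiv f t L -> has_cderiv (fun z => Cmul c (f z)) t (Cmul c L).
Proof.
  intros f c t L Hf. apply cderiv_small in Hf. apply cderiv_small.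
  eapply small_ext; [|apply (small_mul_bounded _ (fun _ => c) (Cmod c) 1 Hf); auto; [lra|apply Cmod_ge0|intros; lra]].
  intros; unfold remainder; ring.
Qed.

Lemma cderiv_csum : forall m (f : nat -> Cx -> Cx) (L : nat -> Cx) t,
  (forall i, (i < m)%nat -> has_cderiv (f i) t (L i)) ->
  has_cderiv (fun z => csum m (fun i => f i z)) t (csum m L).
Proof. induction m; intros; simpl; [apply cderiv_const| apply cderiv_add; auto]. Qed.

Lemma cderiv_diff_bound : forall f t L, has_cderiv f t L ->
  exists d, d > 0 /\ forall h, Cmod h < d -> Cmod (Csub (f (Cadd t h)) (f t)) <= (Cmod L + 1) * Cmod h.
Proof.
  intros f t L Hf. apply cderiv_small in Hf. destruct (Hf 1 ltac:(lra)) as [d [Hd H]].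
  exists d; split; auto. intros h Hhd.
  destruct (Req_dec (Cmod h) 0) as [H0|H0].
  - apply Cmod_eq0 in H0. subst. replace (Csub (f (Cadd t C0)) (f t)) with C0
      by (replace (Cadd t C0) with t by ring; ring). rewrite !Cmod_C0; lra.
  - assert (h <> C0) by (intro; subst; apply H0, Cmod_C0).
    specialize (H h H1 Hhd). unfold remainder in H.
    replace (Csub (f (Cadd t h)) (f t)) with (Cadd (Csub (Csub (f (Cadd t h)) (f t)) (Cmul h L)) (Cmul h L)) by ring.
    eapply Rle_trans; [apply Cmod_triangle|]. rewrite Cmod_mul. nra.
Qed.

(* Product rule: the remainder of fg is rf(h) g(t+h) + f(t) rg(h) + hL (g(t+h) - g(t)). *)
Lemma cderiv_mul : forall f g t L M, has_cderiv f t L -> has_cderiv g t M ->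
  has_cderiv (fun z => Cmul (f z) (g z)) t (Cadd (Cmul L (g t)) (Cmul (f t) M)).
Proof.
  intros f g t L M Hf Hg.
  destruct (cderiv_diff_bound g t M Hg) as [d [Hd Hdg]].
  apply cderiv_small in Hf, Hg. apply cderiv_small.
  pose proof (Cmod_ge0 L) as HL. pose proof (Cmod_ge0 M) as HM.
  assert (Hgh : forall h, Cmod h < Rmin d 1 -> Cmod (g (Cadd t h)) <= Cmod (g t) + (Cmod M + 1)).
  { intros h Hh. pose proof (Rmin_l d 1). pose proof (Rmin_r d 1). pose proof (Cmod_ge0 h).
    specialize (Hdg h ltac:(lra)).
    replace (g (Cadd t h)) with (Cadd (g t) (Csub (g (Cadd t h)) (g t))) by ring.
    eapply Rle_trans; [apply Cmod_triangle|]. nra. }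
  assert (H1 : small (fun h => Cmul (remainder f t L h) (g (Cadd t h)))).
  { apply (small_mul_bounded _ _ (Cmod (g t) + (Cmod M + 1)) (Rmin d 1)); auto.
    - apply Rmin_pos; lra.
    - pose proof (Cmod_ge0 (g t)); lra. }
  assert (H2 : small (fun h => Cmul (remainder g t M h) (f t))).
  { apply (small_mul_bounded _ _ (Cmod (f t)) 1); auto; [lra| apply Cmod_ge0| intros; lra]. }
  assert (H3 : small (fun h => Cmul (Cmul h L) (Csub (g (Cadd t h)) (g t)))).
  { apply (small_quadratic _ (Cmod L * (Cmod M + 1)) d); auto; [nra|].
    intros h Hh. rewrite !Cmod_mul. specialize (Hdg h Hh). pose proof (Cmod_ge0 h).
    apply Rle_trans with (Cmod h * Cmod L * ((Cmod M + 1) * Cmod h)); [apply Rmult_le_compat_l; nra|].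
    right; ring. }
  eapply small_ext; [|apply (small_add _ _ (small_add _ _ H1 H2) H3)].
  intros; unfold remainder; ring.
Qed.

Lemma cderiv_neg_arg : forall f t L, has_cderiv f (Copp t) L -> has_cderiv (fun s => f (Copp s)) t (Copp L).
Proof.
  intros f t L Hf. apply cderiv_small in Hf. apply cderiv_small.
  intros eps He. destruct (Hf eps He) as [d [Hd H]]. exists d; split; auto.
  intros h Hh0 Hhd. specialize (H (Copp h)). rewrite Cmod_opp in H.
  replace (remainder (fun s => f (Copp s)) t (Copp L) h) with (remainder f (Copp t) L (Copp h))
    by (unfold remainder; replace (Copp (Cadd t h)) with (Cadd (Copp t) (Copp h)) by ring; ring).
  apply H; auto. intro Hc. apply Hh0. replace h with (Copp (Copp h)) by ring. rewrite Hc. ring.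
Qed.

Lemma cderiv_zero_ray : forall (g : Cx -> Cx) (proj : Cx -> R) t r,
  (forall s, has_cderiv g s C0) -> t <> C0 ->
  (forall a b, proj (Csub a b) = proj a - proj b) -> (forall a, Rabs (proj a) <= Cmod a) ->
  derivable_pt_lim (fun x => proj (g (Cmul (RtoC x) t))) r 0.
Proof.
  intros g proj t r Hg Ht Psub Pmod eps He.
  pose proof (Cmod_pos t Ht) as Htp.
  pose proof (Hg (Cmul (RtoC r) t)) as H. apply cderiv_small in H.
  destruct (H (eps / 2 / Cmod t)) as [d [Hd Hh]]; [apply Rdiv_lt_0_compat; lra|].
  exists (mkposreal (d / Cmod t) ltac:(apply Rdiv_lt_0_compat; lra)).
  intros h Hh0 Hhd. simpl in Hhd.
  assert (Hht : Cmul (RtoC h) t <> C0).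
  { intro Hc. apply (f_equal Cmod) in Hc. rewrite Cmod_mul, Cmod_RtoC, Cmod_C0 in Hc.
    pose proof (Rabs_pos_lt h Hh0). nra. }
  assert (Hmod : Cmod (Cmul (RtoC h) t) = Rabs h * Cmod t) by (rewrite Cmod_mul, Cmod_RtoC; auto).
  specialize (Hh _ Hht ltac:(rewrite Hmod; apply (Rmult_lt_compat_r (Cmod t)) in Hhd; [|lra];
                              replace (d / Cmod t * Cmod t) with d in Hhd by (field; lra); lra)).
  unfold remainder in Hh. replace (Cmul (Cmul (RtoC h) t) C0) with C0 in Hh by ring.
  replace (Cmul (RtoC (r + h)) t) with (Cadd (Cmul (RtoC r) t) (Cmul (RtoC h) t)) by (unfold RtoC; cxe; ring).
  replace (Csub (Csub (g (Cadd (Cmul (RtoC r) t) (Cmul (RtoC h) t))) (g (Cmul (RtoC r) t))) C0)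
    with (Csub (g (Cadd (Cmul (RtoC r) t) (Cmul (RtoC h) t))) (g (Cmul (RtoC r) t))) in Hh by ring.
  rewrite <- Psub, Rminus_0_r. unfold Rdiv. rewrite Rabs_mult, Rabs_inv.
  pose proof (Pmod (Csub (g (Cadd (Cmul (RtoC r) t) (Cmul (RtoC h) t))) (g (Cmul (RtoC r) t)))).
  pose proof (Rabs_pos_lt h Hh0).
  apply (Rmult_lt_reg_r (Rabs h)); [lra|]. rewrite Rmult_assoc, Rinv_l by lra.
  rewrite Hmod in Hh. replace (eps / 2 / Cmod t * (Rabs h * Cmod t)) with (eps / 2 * Rabs h) in Hh by (field; lra).
  nra.
Qed.

Lemma cderiv_zero_const : forall g t, (forall s, has_cderiv g s C0) -> g t = g C0.
Proof.
  intros g t Hg.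
  destruct (Req_dec (Cmod t) 0) as [Ht|Ht]; [apply Cmod_eq0 in Ht; subst; reflexivity|].
  assert (Ht0 : t <> C0) by (intro; subst; apply Ht, Cmod_C0).
  assert (Hproj : forall proj : Cx -> R, (forall a b, proj (Csub a b) = proj a - proj b) ->
             (forall a, Rabs (proj a) <= Cmod a) -> proj (g t) = proj (g C0)).
  { intros proj Psub Pmod.
    pose proof (fun r => cderiv_zero_ray g proj t r Hg Ht0 Psub Pmod) as Hd.
    pose proof (null_derivative_1 _ (fun x => exist _ 0 (Hd x)) (fun _ => eq_refl) 1 0) as Hc.
    simpl in Hc.
    replace (Cmul (RtoC 1) t) with t in Hc by (unfold RtoC; cxe; ring).
    replace (Cmul (RtoC 0) t) with C0 in Hc by (unfold RtoC; cxe; ring). exact Hc. }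
  apply Cx_ext; apply Hproj; intros; simpl; try ring; [apply Re_le_Cmod| apply Im_le_Cmod].
Qed.

(** * Power series with factorially decaying coefficients *)

Definition pser (c : nat -> Cx) (s : Cx) (N : nat) : Cx := csum N (fun m => Cmul (c m) (Cpow s m)).
(* |c_m| <= K B^m / m!: such a series converges everywhere. *)
Definition ps_bound (c : nat -> Cx) (K B : R) : Prop :=
  0 <= B /\ forall m, Cmod (c m) <= K * B ^ m / INR (fact m).
Definition psum (c : nat -> Cx) (s : Cx) : Cx := epsilon (inhabits C0) (fun l => cvm (pser c s) l).
Definition dcoef (c : nat -> Cx) (m : nat) : Cx := Cmul (RtoC (INR (S m))) (c (S m)).

Lemma ps_K_ge0 : forall c K B, ps_bound c K B -> 0 <= K.
Proof. intros c K B [_ H]. specialize (H O). simpl in H. pose proof (Cmod_ge0 (c O)). lra. Qed.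

(* Such a series converges, by comparison with the exponential series. *)
Lemma ps_cv : forall c K B s, ps_bound c K B -> cvm (pser c s) (psum c s).
Proof.
  intros c K B s Hb.
  assert (Hex : exists l, cvm (pser c s) l).
  { apply (dom_cv _ (fun m => K * ((B * Cmod s) ^ m / INR (fact m)))).
    - intros m. rewrite Cmod_mul, Cmod_pow. destruct Hb as [HB Hc]. specialize (Hc m).
      rewrite Rpow_mult_distr. pose proof (pow_le (Cmod s) m (Cmod_ge0 s)).
      pose proof (INR_fact_lt_0 m).
      apply Rle_trans with (K * B ^ m / INR (fact m) * Cmod s ^ m).
      + apply Rmult_le_compat_r; auto.
      + right; field; lra.
    - destruct (exp_series_cv (B * Cmod s)) as [L HL]. exists (K * L).
      eapply Un_cv_ext; [|apply Un_cv_scal, HL].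
      intros N; simpl. rewrite rsum_scal. reflexivity. }
  unfold psum. apply epsilon_spec. exact Hex.
Qed.

Lemma psum_at0 : forall c K B, ps_bound c K B -> psum c C0 = c O.
Proof.
  intros. apply (cvm_unique (pser c C0)); [eapply ps_cv; eauto|].
  apply cvm_unshift. eapply cvm_ext; [|apply cvm_const].
  intros N. unfold pser. rewrite csum_S_l. rewrite csum_zero'; [simpl; ring|].
  intros; simpl; ring.
Qed.

Lemma ps_bound_dcoef : forall c K B, ps_bound c K B -> ps_bound (dcoef c) (K * B) B.
Proof.
  intros c K B [HB Hc]. split; auto. intros m. unfold dcoef.
  rewrite Cmod_mul, Cmod_RtoC. rewrite Rabs_right by (apply Rle_ge, pos_INR).
  specialize (Hc (S m)). rewrite fact_simpl, mult_INR in Hc. simpl pow in Hc.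
  pose proof (INR_fact_lt_0 m). pose proof (lt_0_INR (S m) ltac:(lia)).
  apply Rle_trans with (INR (S m) * (K * (B * B ^ m) / (INR (S m) * INR (fact m)))).
  - apply Rmult_le_compat_l; auto. apply pos_INR.
  - right. field. lra.
Qed.

(* [dpow t m] = m t^(m-1), defined by the recursion of the derivative of t^m. *)
Fixpoint dpow (t : Cx) (m : nat) : Cx :=
  match m with O => C0 | S m' => Cadd (Cpow t m') (Cmul t (dpow t m')) end.

Lemma dpow_S : forall t m, dpow t (S m) = Cmul (RtoC (INR (S m))) (Cpow t m).
Proof.
  intros t m; induction m.
  - simpl. unfold RtoC; cxe; ring.
  - change (dpow t (S (S m))) with (Cadd (Cpow t (S m)) (Cmul t (dpow t (S m)))).
    rewrite IHm. rewrite (S_INR (S m)). rewrite RtoC_add, RtoC_1. simpl Cpow. ring.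
Qed.

(* m^2 <= 4^m, used to absorb the factor m^2 of [pow_remainder_bound] into the series. *)
Lemma INR_sq_le_pow4 : forall m, INR m * INR m <= 4 ^ m.
Proof.
  assert (H2 : forall m, INR m <= 2 ^ m).
  { induction m; [simpl; lra|]. rewrite S_INR. simpl pow.
    assert (1 <= 2 ^ m) by (apply pow_R1_Rle; lra). lra. }
  intros. replace 4 with (2 * 2) by ring. rewrite Rpow_mult_distr.
  pose proof (H2 m). pose proof (pos_INR m). nra.
Qed.

Lemma dpow_bound : forall t rho m, 1 <= rho -> Cmod t <= rho -> Cmod (dpow t m) <= INR m * rho ^ m.
Proof.
  intros t rho m H1 Ht. destruct m.
  - simpl. rewrite Cmod_C0; lra.
  - rewrite dpow_S, Cmod_mul, Cmod_RtoC, Cmod_pow. rewrite Rabs_right by (apply Rle_ge, pos_INR).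
    apply Rmult_le_compat_l; [apply pos_INR|]. simpl.
    assert (Cmod t ^ m <= rho ^ m) by (apply pow_incr; split; [apply Cmod_ge0|auto]).
    assert (0 <= rho ^ m) by (apply pow_le; lra). nra.
Qed.

Definition pow_remainder (t h : Cx) (m : nat) : Cx :=
  Csub (Csub (Cpow (Cadd t h) m) (Cpow t m)) (Cmul h (dpow t m)).

Lemma pow_remainder_bound : forall t h m, Cmod h <= 1 ->
  Cmod (pow_remainder t h m) <= Cmod h * Cmod h * (INR m * INR m) * (Cmod t + 1) ^ m.
Proof.
  intros t h m Hh. set (rho := Cmod t + 1).
  assert (Hr1 : 1 <= rho) by (unfold rho; pose proof (Cmod_ge0 t); lra).
  induction m.
  - unfold pow_remainder; simpl. replace (Csub (Csub C1 C1) (Cmul h C0)) with C0 by ring. rewrite Cmod_C0.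
    simpl; lra.
  - replace (pow_remainder t h (S m)) with
      (Cadd (Cmul (Cadd t h) (pow_remainder t h m)) (Cmul (Cmul h h) (dpow t m)))
      by (unfold pow_remainder; simpl; ring).
    eapply Rle_trans; [apply Cmod_triangle|]. rewrite !Cmod_mul.
    assert (Ht : Cmod (Cadd t h) <= rho) by (unfold rho; eapply Rle_trans; [apply Cmod_triangle|lra]).
    pose proof (dpow_bound t rho m Hr1 ltac:(unfold rho; lra)).
    pose proof (Cmod_ge0 h). pose proof (Cmod_ge0 (pow_remainder t h m)).
    pose proof (Cmod_ge0 (dpow t m)). pose proof (Cmod_ge0 (Cadd t h)).
    assert (Hp : 0 <= rho ^ m) by (apply pow_le; lra).
    pose proof (pos_INR m). rewrite S_INR. simpl pow.
    apply Rle_trans with (rho * (Cmod h * Cmod h * (INR m * INR m) * rho ^ m) + Cmod h * Cmod h * (INR m * rho ^ m)).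
    + apply Rplus_le_compat; [apply Rmult_le_compat; auto|]. apply Rmult_le_compat_l; auto. nra.
    + assert (0 <= Cmod h * Cmod h * rho ^ m) by nra.
      assert (INR m * rho ^ m <= INR m * (rho * rho ^ m)) by nra.
      nra.
Qed.

Lemma pser_remainder : forall c t h N,
  csum (S N) (fun m => Cmul (c m) (pow_remainder t h m)) =
  Csub (Csub (pser c (Cadd t h) (S N)) (pser c t (S N))) (Cmul h (pser (dcoef c) t N)).
Proof.
  intros. assert (Hd : csum (S N) (fun m => Cmul (c m) (dpow t m)) = pser (dcoef c) t N).
  { rewrite csum_S_l. unfold pser. replace (Cmul (c O) (dpow t O)) with C0 by (simpl; ring).
    transitivity (csum N (fun i => Cmul (c (S i)) (dpow t (S i)))); [ring|].
    apply csum_ext; intros. rewrite dpow_S. unfold dcoef. ring. }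
  rewrite <- Hd. unfold pser, pow_remainder.
  rewrite <- csum_scal_l, <- !csum_sub. apply csum_ext; intros. ring.
Qed.

Lemma ps_remainder_bound : forall c K B t, ps_bound c K B -> exists C, 0 <= C /\
  forall h, Cmod h <= 1 -> Cmod (remainder (psum c) t (psum (dcoef c) t) h) <= C * (Cmod h * Cmod h).
Proof.
  intros c K B t Hb.
  pose proof (ps_K_ge0 c K B Hb) as HK. pose proof Hb as [HB Hc].
  set (rho := Cmod t + 1).
  assert (Hrho : 1 <= rho) by (unfold rho; pose proof (Cmod_ge0 t); lra).
  destruct (exp_series_cv (4 * B * rho)) as [L HL].
  assert (Hnn : forall i, 0 <= (4 * B * rho) ^ i / INR (fact i)).
  { intros; apply Rmult_le_pos; [apply pow_le; nra| left; apply Rinv_0_lt_compat, INR_fact_lt_0]. }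
  assert (HLpos : 0 <= L) by (eapply Rle_trans; [|apply (rsum_growing_le _ L Hnn HL O)]; simpl; lra).
  exists (K * L); split; [nra|]. intros h Hh.
  eapply (cvm_le (fun N => csum (S N) (fun m => Cmul (c m) (pow_remainder t h m)))).
  - eapply cvm_ext; [intros m; symmetry; apply pser_remainder|].
    apply cvm_sub; [apply cvm_sub|].
    + apply (cvm_shift (pser c (Cadd t h))). eapply ps_cv; eauto.
    + apply (cvm_shift (pser c t)). eapply ps_cv; eauto.
    + apply cvm_scal. eapply ps_cv. apply ps_bound_dcoef. exact Hb.
  - intros N. eapply Rle_trans; [apply Cmod_csum|].
    apply Rle_trans with (rsum (S N) (fun m => Cmod h * Cmod h * K * ((4 * B * rho) ^ m / INR (fact m)))).
    + apply rsum_le. intros m _. rewrite Cmod_mul.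
      pose proof (Hc m). pose proof (pow_remainder_bound t h m Hh). fold rho in H0.
      pose proof (INR_sq_le_pow4 m). pose proof (Cmod_ge0 (c m)). pose proof (Cmod_ge0 (pow_remainder t h m)).
      pose proof (Cmod_ge0 h).
      assert (Hrm : 0 <= rho ^ m) by (apply pow_le; lra).
      assert (HBm : 0 <= B ^ m) by (apply pow_le; lra).
      pose proof (INR_fact_lt_0 m).
      apply Rle_trans with ((K * B ^ m / INR (fact m)) * (Cmod h * Cmod h * 4 ^ m * rho ^ m)).
      * apply Rmult_le_compat; auto. eapply Rle_trans; [apply H0|].
        apply Rmult_le_compat_r; auto. apply Rmult_le_compat_l; auto. nra.
      * right. rewrite !Rpow_mult_distr. field. lra.
    + rewrite rsum_scal. pose proof (rsum_growing_le _ L Hnn HL (S N)).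
      pose proof (Cmod_ge0 h). assert (0 <= Cmod h * Cmod h * K) by (apply Rmult_le_pos; nra).
      replace (K * L * (Cmod h * Cmod h)) with (Cmod h * Cmod h * K * L) by ring.
      apply Rmult_le_compat_l; auto.
Qed.

Lemma ps_deriv : forall c K B t, ps_bound c K B -> has_cderiv (psum c) t (psum (dcoef c) t).
Proof.
  intros c K B t Hb. destruct (ps_remainder_bound c K B t Hb) as [C [HC Hr]].
  apply cderiv_small. apply (small_quadratic _ C 1); [lra| auto|].
  intros h Hh. apply Hr. lra.
Qed.

Definition mderiv (n : nat) (F : Cx -> mat) (z0 : Cx) (F' : mat) : Prop :=
  forall i j, (i < n)%nat -> (j < n)%nat -> has_cderiv (fun z => F z i j) z0 (F' i j).

Lemma mderiv_const : forall n M z0, mderiv n (fun _ => M) z0 mzero.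
Proof. intros n M z0 i j Hi Hj. apply cderiv_const. Qed.

Lemma mderiv_affine : forall n S E z0, mderiv n (fun z => madd S (mscale z E)) z0 E.
Proof.
  intros n S E z0 i j Hi Hj. unfold madd, mscale.
  replace (E i j) with (Cadd C0 (Cmul (E i j) C1)) by ring.
  apply cderiv_add; [apply cderiv_const|].
  eapply cderiv_ext; [|apply cderiv_scal, cderiv_id]. intros; simpl; ring.
Qed.

Lemma mderiv_mmul : forall n F G z0 F' G', mderiv n F z0 F' -> mderiv n G z0 G' ->
  mderiv n (fun z => mmul n (F z) (G z)) z0 (madd (mmul n F' (G z0)) (mmul n (F z0) G')).
Proof.
  intros n F G z0 F' G' HF HG i j Hi Hj. unfold madd, mmul.
  rewrite <- csum_add. apply cderiv_csum. intros l Hl. apply cderiv_mul; auto.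
Qed.

Lemma mderiv_mtr : forall n F z0 F', mderiv n F z0 F' -> has_cderiv (fun z => mtr n (F z)) z0 (mtr n F').
Proof. intros. unfold mtr. apply cderiv_csum. intros; apply H; auto. Qed.

(* The derivative of Q^m in direction E (Leibniz expansion). *)
Fixpoint dmpow (n : nat) (Q E : mat) (m : nat) : mat :=
  match m with O => mzero | S m' => madd (mmul n E (mpow n Q m')) (mmul n Q (dmpow n Q E m')) end.

Lemma mderiv_mpow : forall n F z0 F' m, mderiv n F z0 F' ->
  mderiv n (fun z => mpow n (F z) m) z0 (dmpow n (F z0) F' m).
Proof. intros n F z0 F' m HF. induction m; simpl; [apply mderiv_const| apply mderiv_mmul; auto]. Qed.

(* Under the trace (and a weight B commuting with Q) the m terms of the Leibniz
   expansion coincide: tr (B dQ^m) = m tr (Q^(m-1) B E). *)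
Lemma dmpow_trace : forall n Q E m B, meq n (mmul n B Q) (mmul n Q B) ->
  mtr n (mmul n B (dmpow n Q E m)) = Cmul (RtoC (INR m)) (mtr n (mmul n (mmul n (mpow n Q (m - 1)) B) E)).
Proof.
  intros n Q E m. induction m; intros B HB.
  - simpl. rewrite mmul_zero_r, mtr_zero. unfold RtoC; cxe; ring.
  - simpl dmpow. rewrite mmul_madd_r, mtr_add.
    rewrite <- (mmul_assoc n B Q). rewrite (IHm (mmul n B Q)).
    2:{ rewrite HB at 1. rewrite mmul_assoc. reflexivity. }
    rewrite <- (mmul_assoc n B E). rewrite (mtr_comm n (mmul n B E)). rewrite <- (mmul_assoc n (mpow n Q m) B E).
    replace (S m - 1)%nat with m by lia.
    destruct m; [simpl; unfold RtoC; cxe; ring|].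
    replace (S m - 1)%nat with m by lia.
    assert (Ht : mtr n (mmul n (mmul n (mpow n Q m) (mmul n B Q)) E) = mtr n (mmul n (mmul n (mpow n Q (S m)) B) E)).
    { apply mtr_mor. rewrite HB. rewrite <- mmul_assoc. rewrite <- mpow_S_r. reflexivity. }
    rewrite Ht. rewrite !S_INR.
    set (x := mtr n (mmul n (mmul n (mpow n Q (S m)) B) E)). unfold RtoC; cxe; ring.
Qed.

Lemma mpow_deriv_trace : forall n Q E k, (k >= 1)%nat ->
  has_cderiv (fun z => Cmul (RtoC (/ INR k)) (mtr n (mpow n (madd Q (mscale z E)) k))) C0
    (mtr n (mmul n (mpow n Q (k - 1)) E)).
Proof.
  intros n Q E k Hk.
  apply (cderiv_val _ _ (Cmul (RtoC (/ INR k)) (mtr n (dmpow n (madd Q (mscale C0 E)) E k)))).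
  { apply cderiv_scal. apply mderiv_mtr. apply mderiv_mpow. apply mderiv_affine. }
  assert (HS : meq n (madd Q (mscale C0 E)) Q) by (intros i j _ _; unfold madd, mscale; ring).
  assert (Hd : forall m, meq n (dmpow n (madd Q (mscale C0 E)) E m) (dmpow n Q E m)).
  { induction m; cbn [dmpow]; [reflexivity|]. rewrite IHm. rewrite HS. reflexivity. }
  rewrite (mtr_mor n _ _ (Hd k)).
  rewrite (mtr_mor n _ (mmul n mId (dmpow n Q E k))) by (rewrite mmul_id_l; reflexivity).
  rewrite dmpow_trace by (rewrite mmul_id_l, mmul_id_r; reflexivity).
  rewrite (mtr_mor n _ (mmul n (mpow n Q (k - 1)) E)) by (rewrite mmul_id_r; reflexivity).
  assert (INR k <> 0) by (apply not_0_INR; lia).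
  set (x := mtr n (mmul n (mpow n Q (k - 1)) E)). unfold RtoC.
  set (r := INR k) in *. cxe; field; auto.
Qed.

(** * The matrix exponential *)

Definition ecoef (n : nat) (A : mat) (i j m : nat) : Cx := Cmul (RtoC (/ INR (fact m))) (mpow n A m i j).
Definition mexpt (n : nat) (A : mat) (s : Cx) : mat := fun i j => psum (ecoef n A i j) s.
(* The sum of the moduli of the entries: every entry of A^m is bounded by (n |A|)^m. *)
Definition Mbound (n : nat) (A : mat) : R := rsum n (fun i => rsum n (fun j => Cmod (A i j))).

Lemma entry_le_Mbound : forall n A i j, (i < n)%nat -> (j < n)%nat -> Cmod (A i j) <= Mbound n A.
Proof.
  intros. unfold Mbound.
  eapply Rle_trans; [| apply (rsum_term_le n (fun i => rsum n (fun j => Cmod (A i j))) i); auto].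
  - apply (rsum_term_le n (fun j => Cmod (A i j)) j); auto. intros; apply Cmod_ge0.
  - intros; apply rsum_ge0; intros; apply Cmod_ge0.
Qed.

Lemma mpow_bound : forall n A m i j, (i < n)%nat -> (j < n)%nat ->
  Cmod (mpow n A m i j) <= (INR n * Mbound n A) ^ m.
Proof.
  intros n A m. induction m; intros i j Hi Hj; simpl.
  - unfold mId. destruct (Nat.eqb i j); [rewrite Cmod_C1| rewrite Cmod_C0]; lra.
  - unfold mmul. eapply Rle_trans; [apply Cmod_csum|].
    apply Rle_trans with (rsum n (fun _ => Mbound n A * (INR n * Mbound n A) ^ m)).
    + apply rsum_le. intros l Hl. rewrite Cmod_mul. apply Rmult_le_compat; try apply Cmod_ge0.
      * apply entry_le_Mbound; auto.
      * apply IHm; auto.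
    + rewrite rsum_const. right; ring.
Qed.

Lemma ecoef_bound : forall n A i j, (i < n)%nat -> (j < n)%nat -> ps_bound (ecoef n A i j) 1 (INR n * Mbound n A).
Proof.
  intros. split.
  - apply Rmult_le_pos; [apply pos_INR| apply rsum_ge0; intros; apply rsum_ge0; intros; apply Cmod_ge0].
  - intros m. unfold ecoef. rewrite Cmod_mul, Cmod_RtoC.
    pose proof (INR_fact_lt_0 m). rewrite Rabs_right by (left; apply Rinv_0_lt_compat; lra).
    pose proof (mpow_bound n A m i j H H0).
    unfold Rdiv. rewrite Rmult_1_l, Rmult_comm. apply Rmult_le_compat_r; auto.
    left; apply Rinv_0_lt_compat; lra.
Qed.

Lemma mexpt_cvm : forall n A s i j, (i < n)%nat -> (j < n)%nat ->
  cvm (fun N => exp_partial n (mscale s A) N i j) (mexpt n A s i j).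
Proof.
  intros. eapply cvm_ext.
  { intros N. unfold exp_partial. apply csum_ext; intros. rewrite mpow_mscale. unfold mscale. reflexivity. }
  eapply cvm_ext; [|apply (cvm_shift (pser (ecoef n A i j) s)); eapply ps_cv; apply ecoef_bound; auto].
  intros N. unfold pser, ecoef. apply csum_ext; intros; ring.
Qed.

Lemma mexp_mexpt : forall n A s, meq n (mexp n (mscale s A)) (mexpt n A s).
Proof.
  intros n A s.
  assert (H : is_mexp n (mscale s A) (mexp n (mscale s A))).
  { unfold mexp. apply epsilon_spec. exists (mexpt n A s).
    intros i j Hi Hj. apply ccv_cvm. apply mexpt_cvm; auto. }
  intros i j Hi Hj. apply (cvm_unique (fun N => exp_partial n (mscale s A) N i j)).
  - apply ccv_cvm. apply H; auto.
  - apply mexpt_cvm; auto.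
Qed.

Lemma mexpt_0 : forall n A, meq n (mexpt n A C0) mId.
Proof.
  intros n A i j Hi Hj. unfold mexpt. erewrite psum_at0 by (apply ecoef_bound; auto).
  unfold ecoef; simpl. unfold RtoC; cxe; rewrite Rinv_1; ring.
Qed.

Lemma mexpt_mmul_l_cvm : forall n A B s i j, (i < n)%nat -> (j < n)%nat ->
  cvm (fun N => csum N (fun m => Cmul (RtoC (/ INR (fact m))) (Cmul (Cpow s m) (mmul n B (mpow n A m) i j))))
      (mmul n B (mexpt n A s) i j).
Proof.
  intros n A B s i j Hi Hj. unfold mmul at 2, mexpt. eapply cvm_ext.
  2:{ apply (cvm_csum n (fun l N => Cmul (B i l) (pser (ecoef n A l j) s N))).
      intros l Hl. apply cvm_scal. eapply ps_cv. apply ecoef_bound; auto. }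
  intros N. unfold pser, ecoef. simpl.
  rewrite <- (csum_ext n (fun l => csum N (fun m => Cmul (B i l) (Cmul (Cmul (RtoC (/ INR (fact m))) (mpow n A m l j)) (Cpow s m)))))
    by (intros; rewrite <- csum_scal_l; reflexivity).
  rewrite csum_swap. apply csum_ext; intros m Hm. unfold mmul.
  rewrite <- csum_scal_l, <- csum_scal_l. apply csum_ext; intros; ring.
Qed.

Lemma mexpt_mmul_r_cvm : forall n A B s i j, (i < n)%nat -> (j < n)%nat ->
  cvm (fun N => csum N (fun m => Cmul (RtoC (/ INR (fact m))) (Cmul (Cpow s m) (mmul n (mpow n A m) B i j))))
      (mmul n (mexpt n A s) B i j).
Proof.
  intros n A B s i j Hi Hj.
  replace (mmul n (mexpt n A s) B i j) with (csum n (fun l => Cmul (B l j) (psum (ecoef n A i l) s)))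
    by (unfold mmul, mexpt; apply csum_ext; intros; ring).
  eapply cvm_ext.
  2:{ apply (cvm_csum n (fun l N => Cmul (B l j) (pser (ecoef n A i l) s N))).
      intros l Hl. apply cvm_scal. eapply ps_cv. apply ecoef_bound; auto. }
  intros N. unfold pser, ecoef. simpl.
  rewrite <- (csum_ext n (fun l => csum N (fun m => Cmul (B l j) (Cmul (Cmul (RtoC (/ INR (fact m))) (mpow n A m i l)) (Cpow s m)))))
    by (intros; rewrite <- csum_scal_l; reflexivity).
  rewrite csum_swap. apply csum_ext; intros m Hm. unfold mmul.
  rewrite <- csum_scal_l, <- csum_scal_l. apply csum_ext; intros; ring.
Qed.

Lemma mexpt_comm : forall n A B s, meq n (mmul n B A) (mmul n A B) ->
  meq n (mmul n B (mexpt n A s)) (mmul n (mexpt n A s) B).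
Proof.
  intros n A B s H i j Hi Hj.
  apply (cvm_unique _ _ _ (mexpt_mmul_l_cvm n A B s i j Hi Hj)).
  eapply cvm_ext; [|apply (mexpt_mmul_r_cvm n A B s i j Hi Hj)].
  intros N. apply csum_ext. intros m Hm. rewrite (mpow_comm_gen n A B m H i j Hi Hj). reflexivity.
Qed.

Lemma mexpt_commA : forall n A t, meq n (mmul n A (mexpt n A t)) (mmul n (mexpt n A t) A).
Proof. intros. apply mexpt_comm. reflexivity. Qed.

Lemma dcoef_ecoef : forall n A i j m,
  dcoef (ecoef n A i j) m = Cmul (RtoC (/ INR (fact m))) (mmul n A (mpow n A m) i j).
Proof.
  intros. unfold dcoef, ecoef. simpl mpow. rewrite fact_simpl, mult_INR.
  pose proof (INR_fact_lt_0 m). pose proof (lt_0_INR (S m) ltac:(lia)).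
  set (r := INR (S m)) in *. set (r2 := INR (fact m)) in *. unfold RtoC; cxe; field; lra.
Qed.

Lemma mderiv_mexpt : forall n A t, mderiv n (fun s => mexpt n A s) t (mmul n A (mexpt n A t)).
Proof.
  intros n A t i j Hi Hj. unfold mexpt at 1.
  apply (cderiv_val _ _ (psum (dcoef (ecoef n A i j)) t)); [eapply ps_deriv; apply ecoef_bound; auto|].
  apply (cvm_unique (pser (dcoef (ecoef n A i j)) t)).
  - eapply ps_cv. apply ps_bound_dcoef. apply ecoef_bound; auto.
  - eapply cvm_ext; [|apply (mexpt_mmul_l_cvm n A A t i j Hi Hj)].
    intros N. unfold pser. apply csum_ext; intros. rewrite dcoef_ecoef. ring.
Qed.

Lemma mderiv_mexpt_neg : forall n A t,
  mderiv n (fun s => mexpt n A (Copp s)) t (mneg (mmul n A (mexpt n A (Copp t)))).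
Proof. intros n A t i j Hi Hj. unfold mneg. apply (cderiv_neg_arg (fun s => mexpt n A s i j)). apply mderiv_mexpt; auto. Qed.

(* exp(sA) exp(-sA) = 1: the product has zero derivative and equals 1 at s = 0. *)
Lemma mexpt_inv_r : forall n A s, meq n (mmul n (mexpt n A s) (mexpt n A (Copp s))) mId.
Proof.
  intros n A s i j Hi Hj.
  set (g := fun z => mmul n (mexpt n A z) (mexpt n A (Copp z)) i j).
  change (g s = mId i j). rewrite (cderiv_zero_const g s).
  - unfold g. replace (Copp C0) with C0 by ring.
    rewrite (mmul_mor n _ _ (mexpt_0 n A) _ _ (mexpt_0 n A)) by auto. apply mmul_id_l; auto.
  - intros z.
    apply (cderiv_val _ _ (madd (mmul n (mmul n A (mexpt n A z)) (mexpt n A (Copp z)))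
                                (mmul n (mexpt n A z) (mneg (mmul n A (mexpt n A (Copp z))))) i j)).
    + apply (mderiv_mmul n (fun s => mexpt n A s) (fun s => mexpt n A (Copp s))); auto.
      * apply mderiv_mexpt.
      * apply mderiv_mexpt_neg.
    + assert (Hc : meq n (mmul n (mmul n A (mexpt n A z)) (mexpt n A (Copp z)))
                         (mmul n (mexpt n A z) (mmul n A (mexpt n A (Copp z))))).
      { rewrite mexpt_commA. rewrite mmul_assoc. reflexivity. }
      rewrite mmul_mneg_r. unfold madd, mneg. rewrite (Hc i j Hi Hj). ring.
Qed.

Lemma mexpt_inv_l : forall n A t, meq n (mmul n (mexpt n A (Copp t)) (mexpt n A t)) mId.
Proof. intros. pose proof (mexpt_inv_r n A (Copp t)). rewrite Copp_Copp in H. exact H. Qed.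

Lemma o_eq : forall a, o a a = C0.
Proof. intros; unfold o; rewrite Nat.eqb_refl; auto. Qed.
Lemma o_lt : forall a b, (a < b)%nat -> o a b = C1.
Proof. intros; unfold o. destruct (Nat.eqb_spec a b); [lia|]. destruct (Nat.ltb_spec a b); [auto|lia]. Qed.
Lemma o_gt : forall a b, (b < a)%nat -> o a b = Copp C1.
Proof. intros; unfold o. destruct (Nat.eqb_spec a b); [lia|]. destruct (Nat.ltb_spec a b); [lia|auto]. Qed.
Lemma o_anti : forall a b, o a b = Copp (o b a).
Proof.
  intros. destruct (lt_eq_lt_dec a b) as [[H|H]|H].
  - rewrite o_lt, o_gt by auto. ring.
  - subst. rewrite o_eq. ring.
  - rewrite o_gt, o_lt by auto. ring.
Qed.

Lemma csum_o_telescope_le : forall d al b (e f : nat -> Cx),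
  (forall a, (al < a)%nat -> e a = C0) -> (forall a, (a <= al)%nat -> e a = Csub (f a) (f (S a))) ->
  (al < d)%nat -> (b <= al)%nat ->
  csum d (fun a => Cmul (o b a) (e a)) = Csub (Csub (f (S b)) (f (S al))) (Csub (f O) (f b)).
Proof.
  intros d al b e f He0 He Hd Hb.
  rewrite (csum_shift_zero (S al)) by (intros; try rewrite He0 by lia; try ring; lia).
  replace (S al) with (b + S (al - b))%nat by lia. rewrite csum_plus.
  rewrite (csum_ext b _ (fun a => Copp (Csub (f a) (f (S a))))).
  2:{ intros. rewrite o_gt by lia. rewrite He by lia. ring. }
  rewrite csum_opp, csum_telescope. rewrite csum_S_l.
  rewrite Nat.add_0_r, o_eq.
  rewrite (csum_ext (al - b) _ (fun a => Csub (f (S b + a)%nat) (f (S b + S a)%nat))).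
  2:{ intros. rewrite o_lt by lia. rewrite He by lia.
      replace (b + S i)%nat with (S b + i)%nat by lia. replace (S (S b + i)) with (S b + S i)%nat by lia. ring. }
  rewrite (csum_telescope (al - b) (fun a => f (S b + a)%nat)).
  rewrite Nat.add_0_r. replace (S b + (al - b))%nat with (S al) by lia.
  replace (b + S (al - b))%nat with (S al) by lia. ring.
Qed.

Lemma csum_o_telescope_gt : forall d al b (e f : nat -> Cx),
  (forall a, (al < a)%nat -> e a = C0) -> (forall a, (a <= al)%nat -> e a = Csub (f a) (f (S a))) ->
  (al < d)%nat -> (al < b)%nat ->
  csum d (fun a => Cmul (o b a) (e a)) = Copp (Csub (f O) (f (S al))).
Proof.
  intros d al b e f He0 He Hd Hb.
  rewrite (csum_shift_zero (S al)) by (intros; try rewrite He0 by lia; try ring; lia).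
  rewrite (csum_ext (S al) _ (fun a => Copp (Csub (f a) (f (S a))))).
  2:{ intros. rewrite o_gt by lia. rewrite He by lia. ring. }
  rewrite csum_opp, csum_telescope. reflexivity.
Qed.

Lemma csum_telescope_d : forall d al (e f : nat -> Cx),
  (forall a, (al < a)%nat -> e a = C0) -> (forall a, (a <= al)%nat -> e a = Csub (f a) (f (S a))) ->
  (al < d)%nat -> csum d e = Csub (f O) (f (S al)).
Proof.
  intros d al e f He0 He Hd.
  rewrite (csum_shift_zero (S al)) by (intros; try rewrite He0 by lia; try ring; lia).
  rewrite (csum_ext (S al) _ (fun a => Csub (f a) (f (S a)))) by (intros; apply He; lia).
  apply csum_telescope.
Qed.

(** * The building blocks of S_alpha and of the gradient of H

   Fix alpha (written [al], 0-based) and k.  With F_b = 1 + W_b V_b write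
   P_<a = F_(a-1) ... F_0,  P_>=a = F_al ... F_a,  P_>a = P_>=(a+1),  P = P_>=0,
   so that S = P Z; let T = S^(k-1), and for a <= al
     G_a = P_<a Z T P_>a,  U_a = P_<a Z T P_>=a,  g_a = G_a W_a,  h_a = V_a G_a.
   These G_a are the matrices through which H depends on V_a and W_a. *)

Definition P_below (n : nat) (p : point) (a : nat) : mat := mprod_down n (IWV p) a.
Definition P_from (n al : nat) (p : point) (a : nat) : mat := mprod_down n (fun m => IWV p (a + m)%nat) (S al - a).
Definition P_all (n al : nat) (p : point) : mat := mprod_down n (IWV p) (S al).
Definition Spow (n al k : nat) (p : point) : mat := mpow n (S_mat n al p) k.
Definition Tpow (n al k : nat) (p : point) : mat := mpow n (S_mat n al p) (k - 1).
Definition ZT (n al k : nat) (p : point) : mat := mmul n (pZ p) (Tpow n al k p).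
(* T P: its transpose is the gradient of H with respect to Z. *)
Definition TP (n al k : nat) (p : point) : mat := mmul n (Tpow n al k p) (P_all n al p).
Definition Gmat (n al k : nat) (p : point) (a : nat) : mat :=
  mmul n (mmul n (P_below n p a) (ZT n al k p)) (P_from n al p (S a)).
Definition Umat (n al k : nat) (p : point) (a : nat) : mat :=
  mmul n (mmul n (P_below n p a) (ZT n al k p)) (P_from n al p a).
Definition gvec (n al k : nat) (p : point) (a : nat) : nat -> Cx :=
  fun i => if Nat.leb a al then mulcol n (Gmat n al k p a) (pW p a) i else C0.
Definition hvec (n al k : nat) (p : point) (a : nat) : nat -> Cx :=
  fun j => if Nat.leb a al then rowmul n (pV p a) (Gmat n al k p a) j else C0.
Definition telE (n al k : nat) (p : point) (a : nat) : mat :=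
  msub (outer (gvec n al k p a) (pV p a)) (outer (pW p a) (hvec n al k p a)).

Lemma P_from_peel : forall n al p a, (a <= al)%nat ->
  meq n (P_from n al p a) (mmul n (P_from n al p (S a)) (IWV p a)).
Proof.
  intros. unfold P_from. replace (S al - a)%nat with (S (al - a)) by lia.
  rewrite mprod_down_peel. replace (S al - S a)%nat with (al - a)%nat by lia.
  rewrite Nat.add_0_r.
  rewrite (mprod_down_ext n (fun m => IWV p (a + S m)%nat) (fun m => IWV p (S a + m)%nat)).
  - reflexivity.
  - intros; f_equal; lia.
Qed.

Lemma P_from_0 : forall n al p, P_from n al p O = P_all n al p.
Proof. intros. reflexivity. Qed.

Lemma P_from_top : forall n al p, P_from n al p (S al) = mId.
Proof. intros. unfold P_from. rewrite Nat.sub_diag. reflexivity. Qed.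

Lemma P_all_split : forall n al p a, (a <= S al)%nat ->
  meq n (P_all n al p) (mmul n (P_from n al p a) (P_below n p a)).
Proof.
  intros. unfold P_all, P_from, P_below. replace (S al) with (a + (S al - a))%nat at 1 by lia.
  apply mprod_down_split.
Qed.

Lemma Umat_Gmat_l : forall n al k p a, (a <= al)%nat ->
  meq n (Umat n al k p a) (mmul n (Gmat n al k p a) (IWV p a)).
Proof.
  intros. unfold Umat, Gmat. rewrite P_from_peel by auto. rewrite !mmul_assoc. reflexivity.
Qed.

Lemma Umat_Gmat_r : forall n al k p a,
  meq n (Umat n al k p (S a)) (mmul n (IWV p a) (Gmat n al k p a)).
Proof.
  intros. unfold Umat, Gmat, P_below. simpl. rewrite !mmul_assoc. reflexivity.
Qed.

Lemma Umat_0 : forall n al k p, meq n (Umat n al k p O) (mmul n (ZT n al k p) (P_all n al p)).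
Proof. intros. unfold Umat. rewrite P_from_0. unfold P_below; simpl. rewrite mmul_id_l. reflexivity. Qed.

Lemma Umat_top : forall n al k p, meq n (Umat n al k p (S al)) (mmul n (P_all n al p) (ZT n al k p)).
Proof. intros. unfold Umat. rewrite P_from_top. rewrite mmul_id_r. reflexivity. Qed.

Lemma IWV_outer : forall p a, IWV p a = madd mId (outer (pW p a) (pV p a)).
Proof. reflexivity. Qed.

(* The key identity g_a V_a - W_a h_a = U_a - U_(a+1), hence the sums below telescope. *)
Lemma telE_eq : forall n al k p a, (a <= al)%nat ->
  meq n (telE n al k p a) (msub (Umat n al k p a) (Umat n al k p (S a))).
Proof.
  intros. rewrite Umat_Gmat_l by auto. rewrite Umat_Gmat_r. rewrite !IWV_outer.
  rewrite mmul_madd_l, mmul_madd_r. rewrite mmul_id_l, mmul_id_r.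
  rewrite outer_mmul_l, outer_mmul_r.
  intros i j Hi Hj. unfold telE, msub, madd, outer, gvec, hvec.
  apply Nat.leb_le in H. rewrite H. ring.
Qed.

Lemma telE_zero : forall n al k p a, (al < a)%nat -> forall i j, telE n al k p a i j = C0.
Proof.
  intros. unfold telE, msub, outer, gvec, hvec.
  destruct (Nat.leb_spec a al); [lia|]. ring.
Qed.


Lemma telE_sum : forall n al k p d, (al < d)%nat ->
  meq n (msum d (telE n al k p)) (msub (mmul n (ZT n al k p) (P_all n al p)) (mmul n (P_all n al p) (ZT n al k p))).
Proof.
  intros n al k p d Hd i j Hi Hj. unfold msum.
  rewrite (csum_telescope_d d al (fun a => telE n al k p a i j) (fun a => Umat n al k p a i j)); auto.
  - unfold msub. rewrite Umat_0, Umat_top by auto. reflexivity.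
  - intros; apply telE_zero; auto.
  - intros. rewrite telE_eq by auto. reflexivity.
Qed.

(* The same sums weighted by the signs o(b,a) that occur in the brackets of V_b, W_b. *)
Lemma signed_telE_sum_le : forall n al k p d b, (al < d)%nat -> (b <= al)%nat ->
  meq n (msum d (fun a => mscale (o b a) (telE n al k p a)))
    (msub (msub (Umat n al k p (S b)) (mmul n (P_all n al p) (ZT n al k p)))
          (msub (mmul n (ZT n al k p) (P_all n al p)) (Umat n al k p b))).
Proof.
  intros n al k p d b Hd Hb i j Hi Hj. unfold msum, mscale.
  rewrite (csum_o_telescope_le d al b (fun a => telE n al k p a i j) (fun a => Umat n al k p a i j)); auto.
  - unfold msub. rewrite Umat_0, Umat_top by auto. reflexivity.
  - intros; apply telE_zero; auto.
  - intros. rewrite telE_eq by auto. reflexivity.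
Qed.

Lemma signed_telE_sum_gt : forall n al k p d b, (al < d)%nat -> (al < b)%nat ->
  meq n (msum d (fun a => mscale (o b a) (telE n al k p a)))
    (mneg (msub (mmul n (ZT n al k p) (P_all n al p)) (mmul n (P_all n al p) (ZT n al k p)))).
Proof.
  intros n al k p d b Hd Hb i j Hi Hj. unfold msum, mscale.
  rewrite (csum_o_telescope_gt d al b (fun a => telE n al k p a i j) (fun a => Umat n al k p a i j)); auto.
  - unfold msub, mneg. rewrite Umat_0, Umat_top by auto. reflexivity.
  - intros; apply telE_zero; auto.
  - intros. rewrite telE_eq by auto. reflexivity.
Qed.
Lemma Spow_eq_l : forall n al k p, (k >= 1)%nat ->
  Spow n al k p = mmul n (S_mat n al p) (Tpow n al k p).
Proof. intros. unfold Spow, Tpow. destruct k; [lia|]. simpl. rewrite Nat.sub_0_r. reflexivity. Qed.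

Lemma Spow_eq_r : forall n al k p, (k >= 1)%nat ->
  meq n (Spow n al k p) (mmul n (Tpow n al k p) (S_mat n al p)).
Proof. intros. rewrite Spow_eq_l by auto. unfold Tpow. apply mpow_comm. Qed.

Lemma TP_Z : forall n al k p, (k >= 1)%nat -> meq n (mmul n (TP n al k p) (pZ p)) (Spow n al k p).
Proof. intros. rewrite Spow_eq_r; auto. unfold TP, S_mat, P_all. rewrite mmul_assoc. reflexivity. Qed.

Lemma P_ZT : forall n al k p, (k >= 1)%nat -> mmul n (P_all n al p) (ZT n al k p) = Spow n al k p.
Proof. intros. rewrite Spow_eq_l by auto. unfold ZT, S_mat, P_all. rewrite mmul_assoc. reflexivity. Qed.

Lemma Z_TP : forall n al k p, mmul n (pZ p) (TP n al k p) = mmul n (ZT n al k p) (P_all n al p).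
Proof. intros. unfold TP, ZT. rewrite mmul_assoc. reflexivity. Qed.

Lemma dot_gvec_hvec : forall n al k p a, dot n (pV p a) (gvec n al k p a) = dot n (hvec n al k p a) (pW p a).
Proof.
  intros. unfold dot, gvec, hvec. destruct (Nat.leb a al).
  - unfold mulcol, rowmul.
    rewrite (csum_ext n _ (fun j => csum n (fun m => Cmul (pV p a j) (Cmul (Gmat n al k p a j m) (pW p a m)))))
      by (intros; rewrite csum_scal_l; reflexivity).
    rewrite csum_swap. apply csum_ext; intros. rewrite <- csum_scal_r. apply csum_ext; intros; ring.
  - transitivity C0; [apply csum_zero'|symmetry; apply csum_zero']; intros; ring.
Qed.

Lemma rowmul_Umat : forall n al k p b l, (b <= al)%nat -> (l < n)%nat ->
  rowmul n (pV p b) (Umat n al k p b) l =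
  Cadd (hvec n al k p b l) (Cmul (dot n (pV p b) (gvec n al k p b)) (pV p b l)).
Proof.
  intros. rewrite (rowmul_meq n _ _ _ l (Umat_Gmat_l n al k p b H)) by auto.
  rewrite IWV_outer, mmul_madd_r. rewrite rowmul_madd.
  rewrite (rowmul_meq n _ _ (Gmat n al k p b) l (mmul_id_r n _)) by auto.
  rewrite (rowmul_meq n _ _ _ l (outer_mmul_r n _ _ _)) by auto.
  rewrite rowmul_outer. unfold hvec, gvec. apply Nat.leb_le in H. rewrite H.
  reflexivity.
Qed.

Lemma rowmul_Umat_S : forall n al k p b l, (b <= al)%nat -> (l < n)%nat ->
  rowmul n (pV p b) (Umat n al k p (S b)) l =
  Cadd (hvec n al k p b l) (Cmul (dot n (pV p b) (pW p b)) (hvec n al k p b l)).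
Proof.
  intros. rewrite (rowmul_meq n _ _ _ l (Umat_Gmat_r n al k p b)) by auto.
  rewrite IWV_outer, mmul_madd_l. rewrite rowmul_madd.
  rewrite (rowmul_meq n _ _ (Gmat n al k p b) l (mmul_id_l n _)) by auto.
  rewrite (rowmul_meq n _ _ _ l (outer_mmul_l n _ _ _)) by auto.
  rewrite rowmul_outer. unfold hvec. apply Nat.leb_le in H. rewrite H. reflexivity.
Qed.

Lemma mulcol_Umat : forall n al k p b kk, (b <= al)%nat -> (kk < n)%nat ->
  mulcol n (Umat n al k p b) (pW p b) kk =
  Cadd (gvec n al k p b kk) (Cmul (gvec n al k p b kk) (dot n (pV p b) (pW p b))).
Proof.
  intros. rewrite (mulcol_meq n _ _ _ kk (Umat_Gmat_l n al k p b H)) by auto.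
  rewrite IWV_outer, mmul_madd_r. rewrite mulcol_madd.
  rewrite (mulcol_meq n _ _ (Gmat n al k p b) kk (mmul_id_r n _)) by auto.
  rewrite (mulcol_meq n _ _ _ kk (outer_mmul_r n _ _ _)) by auto.
  rewrite mulcol_outer. unfold gvec. apply Nat.leb_le in H. rewrite H. reflexivity.
Qed.

Lemma mulcol_Umat_S : forall n al k p b kk, (b <= al)%nat -> (kk < n)%nat ->
  mulcol n (Umat n al k p (S b)) (pW p b) kk =
  Cadd (gvec n al k p b kk) (Cmul (pW p b kk) (dot n (hvec n al k p b) (pW p b))).
Proof.
  intros. rewrite (mulcol_meq n _ _ _ kk (Umat_Gmat_r n al k p b)) by auto.
  rewrite IWV_outer, mmul_madd_l. rewrite mulcol_madd.
  rewrite (mulcol_meq n _ _ (Gmat n al k p b) kk (mmul_id_l n _)) by auto.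
  rewrite (mulcol_meq n _ _ _ kk (outer_mmul_l n _ _ _)) by auto.
  rewrite mulcol_outer. unfold gvec, hvec. apply Nat.leb_le in H. rewrite H.
  reflexivity.
Qed.


(** * The gradient of H

   Changing one coordinate of the point by z changes S = P Z affinely in z, so
   by [mpow_deriv_trace] the partial derivative of H is tr (T E) for the
   corresponding direction E of S.  Along X nothing changes; along Z_ij,
   E = P e_i e_j^T; along V_(a,j) and W_(a,j), with a <= al,
   E = P_>a W_a e_j^T P_<a Z  and  E = P_>a e_j V_a P_<a Z. *)

Definition gradH (n al k : nat) (p : point) (c : coord) : Cx :=
  match c with
  | cX _ _ => C0
  | cZ i j => TP n al k p j i
  | cV a j => gvec n al k p a j
  | cW a i => hvec n al k p a i
  end.

Definition ev (j : nat) : nat -> Cx := fun r => dlt r j.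

Lemma rowmul_ev : forall n j M r, (j < n)%nat -> rowmul n (ev j) M r = M j r.
Proof.
  intros. unfold rowmul, ev. rewrite (csum_ext n _ (fun m => Cmul (dlt j m) (M m r))) by (intros; rewrite dlt_sym; ring).
  apply (csum_delta n j (fun m => M m r)); auto.
Qed.

Lemma addat_eq : forall F a b z, addat F a b z = fun x y => Cadd (F x y) (Cmul z (Cmul (dlt x a) (dlt y b))).
Proof.
  intros. extensionality x; extensionality y. unfold addat, dlt.
  destruct (Nat.eqb x a); destruct (Nat.eqb y b); simpl; ring.
Qed.

Lemma Ham_deriv_dir : forall n al k p p_ E L, (k >= 1)%nat ->
  (forall z, meq n (S_mat n al (p_ z)) (madd (S_mat n al p) (mscale z E))) ->
  L = mtr n (mmul n (Tpow n al k p) E) ->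
  has_cderiv (fun z => Ham n al k (p_ z)) C0 L.
Proof.
  intros n al k p p_ E L Hk HE HL. subst L.
  eapply cderiv_ext; [| apply (mpow_deriv_trace n (S_mat n al p) E k Hk)].
  intros z. unfold Ham. f_equal. apply mtr_mor. rewrite (HE z). reflexivity.
Qed.

Lemma Ham_deriv_unchanged : forall n al k p p_, (k >= 1)%nat ->
  (forall z, pZ (p_ z) = pZ p) ->
  (forall z b, (b <= al)%nat -> meq n (IWV (p_ z) b) (IWV p b)) ->
  has_cderiv (fun z => Ham n al k (p_ z)) C0 C0.
Proof.
  intros n al k p p_ Hk HZ HF. apply (Ham_deriv_dir n al k p p_ mzero C0 Hk).
  - intros z i j Hi Hj. unfold S_mat. rewrite HZ.
    rewrite (mmul_mor n _ _ (mprod_down_ext_meq n (IWV (p_ z)) (IWV p) (S al) ltac:(intros; apply HF; lia))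
               _ _ (meq_refl n (pZ p))) by auto.
    unfold madd, mscale, mzero. ring.
  - rewrite mmul_zero_r, mtr_zero. reflexivity.
Qed.

Lemma Ham_deriv_Z : forall n al k p i j, (k >= 1)%nat -> (i < n)%nat -> (j < n)%nat ->
  has_cderiv (fun z => Ham n al k (upd p (cZ i j) z)) C0 (TP n al k p j i).
Proof.
  intros n al k p i j Hk Hi Hj.
  apply (Ham_deriv_dir n al k p _ (mmul n (P_all n al p) (outer (ev i) (ev j))) _ Hk).
  - intros z. unfold S_mat. change (IWV (upd p (cZ i j) z)) with (IWV p). cbn [upd pZ]. rewrite addat_eq.
    intros x y Hx Hy. unfold madd, mscale, mmul, outer, ev, P_all.
    rewrite <- csum_scal_l, <- csum_add. apply csum_ext; intros; ring.
  - rewrite <- mmul_assoc, mtr_comm, mtr_outer.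
    rewrite (csum_ext n _ (fun r => Cmul (dlt i r) (mmul n (Tpow n al k p) (P_all n al p) j r))).
    + rewrite csum_delta by auto. reflexivity.
    + intros. rewrite rowmul_ev by auto. unfold ev. rewrite dlt_sym. reflexivity.
Qed.

Lemma S_mat_update : forall n al p p' a z O, (a <= al)%nat ->
  pZ p' = pZ p ->
  (forall b, b <> a -> meq n (IWV p' b) (IWV p b)) ->
  meq n (IWV p' a) (madd (IWV p a) (mscale z O)) ->
  meq n (S_mat n al p') (madd (S_mat n al p)
     (mscale z (mmul n (mmul n (mmul n (P_from n al p (S a)) O) (P_below n p a)) (pZ p)))).
Proof.
  intros n al p p' a z O Ha HZ Hb HA.
  assert (HQ : meq n (P_from n al p' (S a)) (P_from n al p (S a))).
  { unfold P_from. apply mprod_down_ext_meq. intros. apply Hb. lia. }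
  assert (HP : meq n (P_below n p' a) (P_below n p a)).
  { unfold P_below. apply mprod_down_ext_meq. intros. apply Hb. lia. }
  unfold S_mat. rewrite HZ.
  change (mprod_down n (IWV p') (S al)) with (P_all n al p').
  change (mprod_down n (IWV p) (S al)) with (P_all n al p).
  rewrite (P_all_split n al p' a), (P_all_split n al p a) by lia.
  rewrite (P_from_peel n al p' a Ha), (P_from_peel n al p a Ha).
  rewrite HQ, HP, HA.
  rewrite mmul_madd_r, mmul_madd_l, mmul_madd_l.
  rewrite !mmul_mscale_r, !mmul_mscale_l. rewrite !mmul_assoc. reflexivity.
Qed.

Lemma IWV_upd_V_other : forall p a j z b, b <> a -> IWV (upd p (cV a j) z) b = IWV p b.
Proof.
  intros. unfold IWV. simpl. rewrite addat_eq. extensionality x; extensionality y.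
  unfold madd. rewrite (dlt_neq b a H). f_equal. ring.
Qed.
Lemma IWV_upd_W_other : forall p a j z b, b <> a -> IWV (upd p (cW a j) z) b = IWV p b.
Proof.
  intros. unfold IWV. simpl. rewrite addat_eq. extensionality x; extensionality y.
  unfold madd. rewrite (dlt_neq b a H). f_equal. ring.
Qed.

Lemma IWV_upd_V_same : forall n p a j z,
  meq n (IWV (upd p (cV a j) z) a) (madd (IWV p a) (mscale z (outer (pW p a) (ev j)))).
Proof.
  intros n p a j z x y _ _. unfold IWV. simpl. rewrite addat_eq. unfold madd, mscale, outer, ev.
  rewrite dlt_eq. ring.
Qed.
Lemma IWV_upd_W_same : forall n p a j z,
  meq n (IWV (upd p (cW a j) z) a) (madd (IWV p a) (mscale z (outer (ev j) (pV p a)))).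
Proof.
  intros n p a j z x y _ _. unfold IWV. simpl. rewrite addat_eq. unfold madd, mscale, outer, ev.
  rewrite dlt_eq. ring.
Qed.

Lemma mtr_Gmat : forall n al k p a O,
  mtr n (mmul n (Tpow n al k p) (mmul n (mmul n (mmul n (P_from n al p (S a)) O) (P_below n p a)) (pZ p))) =
  mtr n (mmul n O (Gmat n al k p a)).
Proof.
  intros. rewrite mtr_cyc3. f_equal. unfold Gmat, ZT. rewrite !mmul_assoc. reflexivity.
Qed.

Lemma Ham_deriv_V : forall n al k p a j, (k >= 1)%nat -> (a <= al)%nat -> (j < n)%nat ->
  has_cderiv (fun z => Ham n al k (upd p (cV a j) z)) C0 (gvec n al k p a j).
Proof.
  intros n al k p a j Hk Ha Hj.
  eapply (Ham_deriv_dir n al k p _ _ _ Hk).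
  - intros z. apply S_mat_update; [exact Ha|reflexivity| |apply IWV_upd_V_same].
    intros b Hb; rewrite IWV_upd_V_other by exact Hb; reflexivity.
  - rewrite mtr_Gmat, mtr_outer. unfold gvec. apply Nat.leb_le in Ha. rewrite Ha.
    unfold mulcol. apply csum_ext; intros. rewrite rowmul_ev by auto. ring.
Qed.

Lemma Ham_deriv_W : forall n al k p a j, (k >= 1)%nat -> (a <= al)%nat -> (j < n)%nat ->
  has_cderiv (fun z => Ham n al k (upd p (cW a j) z)) C0 (hvec n al k p a j).
Proof.
  intros n al k p a j Hk Ha Hj.
  eapply (Ham_deriv_dir n al k p _ _ _ Hk).
  - intros z. apply S_mat_update; [exact Ha|reflexivity| |apply IWV_upd_W_same].
    intros b Hb; rewrite IWV_upd_W_other by exact Hb; reflexivity.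
  - rewrite mtr_Gmat, mtr_outer. unfold hvec. apply Nat.leb_le in Ha. rewrite Ha. unfold ev.
    rewrite (csum_ext n _ (fun r => Cmul (dlt j r) (rowmul n (pV p a) (Gmat n al k p a) r))) by (intros; rewrite dlt_sym; ring).
    symmetry; apply csum_delta; auto.
Qed.

Lemma in_coords : forall n d c, In c (coords n d) ->
  match c with
  | cX i j => (i < n)%nat /\ (j < n)%nat
  | cZ i j => (i < n)%nat /\ (j < n)%nat
  | cV a j => (a < d)%nat /\ (j < n)%nat
  | cW a j => (a < d)%nat /\ (j < n)%nat
  end.
Proof.
  intros n d c H. unfold coords in H. rewrite !in_app_iff in H.
  destruct H as [H|[H|[H|H]]]; apply in_map_iff in H; destruct H as [[x y] [Hc Hin]];
    apply in_prod_iff in Hin; destruct Hin as [H1 H2]; apply in_seq in H1; apply in_seq in H2;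
    subst; simpl; lia.
Qed.

Lemma Ham_deriv : forall n d al k p c, (k >= 1)%nat -> In c (coords n d) ->
  has_cderiv (fun z => Ham n al k (upd p c z)) C0 (gradH n al k p c).
Proof.
  intros n d al k p c Hk Hc. apply in_coords in Hc.
  destruct c as [i j|i j|a j|a j]; simpl gradH; destruct Hc as [H1 H2].
  - apply (Ham_deriv_unchanged n al k p); auto; reflexivity.
  - apply Ham_deriv_Z; auto.
  - destruct (Nat.leb_spec a al) as [Ha|Ha]; [apply Ham_deriv_V; auto|].
    unfold gvec. apply Nat.leb_gt in Ha as Ha'. rewrite Ha'.
    apply (Ham_deriv_unchanged n al k p); auto. intros z b Hb. rewrite IWV_upd_V_other by lia. reflexivity.
  - destruct (Nat.leb_spec a al) as [Ha|Ha]; [apply Ham_deriv_W; auto|].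
    unfold hvec. apply Nat.leb_gt in Ha as Ha'. rewrite Ha'.
    apply (Ham_deriv_unchanged n al k p); auto. intros z b Hb. rewrite IWV_upd_W_other by lia. reflexivity.
Qed.

(** * The Hamiltonian vector field in coordinates

   The derivative of a coordinate c along the flow of H is
   sum_a dH(a) {a, c}. *)

Lemma clsum_coords : forall n d f, clsum (coords n d) f =
  Cadd (Cadd (Cadd (csum n (fun i => csum n (fun j => f (cX i j))))
                   (csum n (fun i => csum n (fun j => f (cZ i j)))))
             (csum d (fun a => csum n (fun j => f (cV a j)))))
       (csum d (fun a => csum n (fun j => f (cW a j)))).
Proof.
  intros. unfold coords. rewrite !clsum_app, !clsum_map, !clsum_prod, !clsum_seq.
  assert (Hs : forall m (g : nat -> nat -> Cx), csum m (fun x => clsum (seq 0 n) (g x)) = csum m (fun x => csum n (g x)))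
    by (intros; apply csum_ext; intros; apply clsum_seq).
  simpl. rewrite !Hs. ring.
Qed.

Definition Zpart (n al k : nat) (p : point) (c : coord) : Cx :=
  csum n (fun i => csum n (fun j => Cmul (gradH n al k p (cZ i j)) (br n p (cZ i j) c))).
Definition Vpart (n d al k : nat) (p : point) (c : coord) : Cx :=
  csum d (fun a => csum n (fun j => Cmul (gradH n al k p (cV a j)) (br n p (cV a j) c))).
Definition Wpart (n d al k : nat) (p : point) (c : coord) : Cx :=
  csum d (fun a => csum n (fun j => Cmul (gradH n al k p (cW a j)) (br n p (cW a j) c))).

Lemma ham_field_split : forall n d al k p c,
  clsum (coords n d) (fun a => Cmul (gradH n al k p a) (br n p a c)) =
  Cadd (Zpart n al k p c) (Cadd (Vpart n d al k p c) (Wpart n d al k p c)).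
Proof.
  intros. rewrite clsum_coords. unfold Zpart, Vpart, Wpart.
  rewrite (csum_zero' n (fun i => csum n (fun j => Cmul (gradH n al k p (cX i j)) (br n p (cX i j) c))))
    by (intros; apply csum_zero'; intros; simpl; ring).
  ring.
Qed.

Definition dsum (n : nat) (F : nat -> nat -> Cx) : Cx := csum n (fun i => csum n (fun j => F i j)).

Lemma dsum_comb4 : forall n c (a b e f F : nat -> nat -> Cx),
  (forall i j, F i j = Cmul c (Csub (Cadd (Cadd (a i j) (b i j)) (e i j)) (f i j))) ->
  csum n (fun i => csum n (fun j => F i j)) = Cmul c (Csub (Cadd (Cadd (dsum n a) (dsum n b)) (dsum n e)) (dsum n f)).
Proof.
  intros. unfold dsum. rewrite <- !csum_add, <- csum_sub, <- csum_scal_l. apply csum_ext; intros.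
  rewrite <- !csum_add, <- csum_sub, <- csum_scal_l. apply csum_ext; intros. auto.
Qed.

Lemma dsum_comb2 : forall n c (a b F : nat -> nat -> Cx),
  (forall i j, F i j = Cmul c (Csub (a i j) (b i j))) ->
  csum n (fun i => csum n (fun j => F i j)) = Cmul c (Csub (dsum n a) (dsum n b)).
Proof.
  intros. unfold dsum. rewrite <- csum_sub, <- csum_scal_l. apply csum_ext; intros.
  rewrite <- csum_sub, <- csum_scal_l. apply csum_ext; intros. auto.
Qed.

Lemma ssum_comb2 : forall n c (a b F : nat -> Cx),
  (forall j, F j = Cmul c (Csub (a j) (b j))) ->
  csum n F = Cmul c (Csub (csum n a) (csum n b)).
Proof. intros. rewrite <- csum_sub, <- csum_scal_l. apply csum_ext; intros. auto. Qed.

Lemma dsum_delta_l : forall n (D M : mat) k l, (k < n)%nat ->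
  dsum n (fun i j => Cmul (D j i) (Cmul (dlt k j) (M i l))) = mmul n D M k l.
Proof.
  intros. unfold dsum, mmul. apply csum_ext; intros i Hi.
  rewrite (csum_ext n _ (fun j => Cmul (dlt k j) (Cmul (D j i) (M i l)))) by (intros; ring).
  apply csum_delta; auto.
Qed.

Lemma dsum_delta_r : forall n (D M : mat) k l, (l < n)%nat ->
  dsum n (fun i j => Cmul (D j i) (Cmul (dlt i l) (M k j))) = mmul n M D k l.
Proof.
  intros. unfold dsum, mmul at 1.
  rewrite (csum_ext n _ (fun i => Cmul (dlt l i) (csum n (fun j => Cmul (M k j) (D j i))))).
  - apply (csum_delta n l (fun i => csum n (fun j => Cmul (M k j) (D j i)))); auto.
  - intros. rewrite <- csum_scal_l. apply csum_ext; intros. rewrite dlt_sym. ring.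
Qed.

Lemma dsum_sandwich : forall n (D A B : mat) k l,
  dsum n (fun i j => Cmul (D j i) (Cmul (A i l) (B k j))) = mmul n (mmul n B D) A k l.
Proof.
  intros. unfold dsum, mmul at 1. apply csum_ext; intros. unfold mmul. rewrite <- csum_scal_r.
  apply csum_ext; intros; ring.
Qed.

Lemma dsum_delta_rowmul : forall n (D : mat) (w : nat -> Cx) l, (l < n)%nat ->
  dsum n (fun i j => Cmul (D j i) (Cmul (w j) (dlt i l))) = rowmul n w D l.
Proof.
  intros. unfold dsum. rewrite (csum_ext n _ (fun i => Cmul (dlt l i) (csum n (fun j => Cmul (w j) (D j i))))).
  - apply (csum_delta n l (fun i => csum n (fun j => Cmul (w j) (D j i)))); auto.
  - intros. rewrite <- csum_scal_l. apply csum_ext; intros. rewrite dlt_sym. ring.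
Qed.

Lemma dsum_rowmul2 : forall n (D A : mat) (v : nat -> Cx) l,
  dsum n (fun i j => Cmul (D j i) (Cmul (v j) (A i l))) = rowmul n (rowmul n v D) A l.
Proof.
  intros. unfold dsum, rowmul at 1. apply csum_ext; intros. unfold rowmul. rewrite <- csum_scal_r.
  apply csum_ext; intros; ring.
Qed.

Lemma dsum_delta_mulcol : forall n (D : mat) (w : nat -> Cx) k, (k < n)%nat ->
  dsum n (fun i j => Cmul (D j i) (Cmul (dlt k j) (w i))) = mulcol n D w k.
Proof.
  intros. unfold dsum, mulcol. apply csum_ext; intros i Hi.
  rewrite (csum_ext n _ (fun j => Cmul (dlt k j) (Cmul (D j i) (w i)))) by (intros; ring).
  apply (csum_delta n k (fun j => Cmul (D j i) (w i))); auto.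
Qed.

Lemma dsum_mulcol2 : forall n (D A : mat) (w : nat -> Cx) k,
  dsum n (fun i j => Cmul (D j i) (Cmul (A k j) (w i))) = mulcol n A (mulcol n D w) k.
Proof.
  intros. unfold dsum. rewrite csum_swap. unfold mulcol at 1. apply csum_ext; intros. unfold mulcol.
  rewrite <- csum_scal_l. apply csum_ext; intros; ring.
Qed.

Definition ZTP (n al k : nat) (p : point) : mat := mmul n (ZT n al k p) (P_all n al p).

Lemma ZTP_Z : forall n al k p, (k >= 1)%nat -> meq n (mmul n (ZTP n al k p) (pZ p)) (mmul n (pZ p) (Spow n al k p)).
Proof.
  intros. unfold ZTP, ZT, P_all. rewrite !mmul_assoc.
  change (mmul n (mprod_down n (IWV p) (S al)) (pZ p)) with (S_mat n al p).
  rewrite (Spow_eq_r n al k p H). reflexivity.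
Qed.

Definition sum_gV (n al k : nat) (p : point) (d : nat) : mat := msum d (fun a => outer (gvec n al k p a) (pV p a)).
Definition sum_Wh (n al k : nat) (p : point) (d : nat) : mat := msum d (fun a => outer (pW p a) (hvec n al k p a)).

Lemma sum_gV_Wh : forall n d al k p i j, (al < d)%nat -> (k >= 1)%nat -> (i < n)%nat -> (j < n)%nat ->
  Csub (sum_gV n al k p d i j) (sum_Wh n al k p d i j) = Csub (ZTP n al k p i j) (Spow n al k p i j).
Proof.
  intros. unfold sum_gV, sum_Wh, msum. rewrite <- csum_sub.
  transitivity (msum d (telE n al k p) i j); [apply csum_ext; intros; reflexivity|].
  rewrite (telE_sum n al k p d H i j) by auto. unfold msub. rewrite P_ZT by auto. reflexivity.
Qed.

Lemma sum_gV_Wh_mmul_r : forall n d al k p M kk ll, (al < d)%nat -> (k >= 1)%nat -> (kk < n)%nat ->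
  Csub (mmul n (sum_gV n al k p d) M kk ll) (mmul n (sum_Wh n al k p d) M kk ll) =
  Csub (mmul n (ZTP n al k p) M kk ll) (mmul n (Spow n al k p) M kk ll).
Proof. intros. rewrite !mmul_sub_entry_l. apply csum_ext; intros. rewrite sum_gV_Wh by auto. reflexivity. Qed.

Lemma sum_gV_Wh_mmul_l : forall n d al k p M kk ll, (al < d)%nat -> (k >= 1)%nat -> (ll < n)%nat ->
  Csub (mmul n M (sum_gV n al k p d) kk ll) (mmul n M (sum_Wh n al k p d) kk ll) =
  Csub (mmul n M (ZTP n al k p) kk ll) (mmul n M (Spow n al k p) kk ll).
Proof. intros. rewrite !mmul_sub_entry_r. apply csum_ext; intros. rewrite sum_gV_Wh by auto. reflexivity. Qed.

Lemma VWpart_U : forall n d al k p (U : mat) c kk ll,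
  (al < d)%nat -> (k >= 1)%nat -> (kk < n)%nat -> (ll < n)%nat ->
  (forall a j, br n p (cV a j) c = Copp (brUV n U (pV p a) kk ll j)) ->
  (forall a j, br n p (cW a j) c = Copp (brUW n U (pW p a) kk ll j)) ->
  Cadd (Vpart n d al k p c) (Wpart n d al k p c) =
  Cmul (Copp half) (Csub (Csub (mmul n (ZTP n al k p) U kk ll) (mmul n (Spow n al k p) U kk ll))
                         (Csub (mmul n U (ZTP n al k p) kk ll) (mmul n U (Spow n al k p) kk ll))).
Proof.
  intros n d al k p U c kk ll Hd Hk Hkk Hll HbV HbW.
  assert (HV : Vpart n d al k p c =
     Cmul (Copp half) (Csub (mmul n (sum_gV n al k p d) U kk ll) (mmul n U (sum_gV n al k p d) kk ll))).
  { unfold Vpart, sum_gV. rewrite msum_outer_mmul_r, msum_outer_mmul_l.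
    rewrite <- csum_sub, <- csum_scal_l. apply csum_ext; intros a Ha.
    rewrite (ssum_comb2 n (Copp half)
      (fun j => Cmul (gvec n al k p a j) (Cmul (dlt kk j) (rowmul n (pV p a) U ll)))
      (fun j => Cmul (gvec n al k p a j) (Cmul (pV p a ll) (U kk j)))).
    - rewrite csum_delta_mid by auto.
      rewrite (csum_ext n _ (fun j => Cmul (pV p a ll) (Cmul (gvec n al k p a j) (U kk j)))) by (intros; ring).
      rewrite csum_scal_l. unfold mulcol. rewrite (csum_ext n (fun j => Cmul (gvec n al k p a j) (U kk j))
        (fun j => Cmul (U kk j) (gvec n al k p a j))) by (intros; ring). ring.
    - intros. simpl gradH. rewrite HbV. unfold brUV. ring. }
  assert (HW : Wpart n d al k p c =
     Cmul (Copp half) (Csub (mmul n U (sum_Wh n al k p d) kk ll) (mmul n (sum_Wh n al k p d) U kk ll))).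
  { unfold Wpart, sum_Wh. rewrite msum_outer_mmul_r, msum_outer_mmul_l.
    rewrite <- csum_sub, <- csum_scal_l. apply csum_ext; intros a Ha.
    rewrite (ssum_comb2 n (Copp half)
      (fun j => Cmul (hvec n al k p a j) (Cmul (dlt ll j) (mulcol n U (pW p a) kk)))
      (fun j => Cmul (hvec n al k p a j) (Cmul (pW p a kk) (U j ll)))).
    - rewrite csum_delta_mid by auto.
      rewrite (csum_ext n _ (fun j => Cmul (pW p a kk) (Cmul (hvec n al k p a j) (U j ll)))) by (intros; ring).
      rewrite csum_scal_l. unfold rowmul. ring.
    - intros. simpl gradH. rewrite HbW. unfold brUW. rewrite (dlt_sym j ll). ring. }
  rewrite HV, HW, <- (sum_gV_Wh_mmul_r n d), <- (sum_gV_Wh_mmul_l n d) by auto. ring.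
Qed.

Lemma Zpart_X : forall n al k p kk ll, (k >= 1)%nat -> (kk < n)%nat -> (ll < n)%nat ->
  Zpart n al k p (cX kk ll) =
  Cmul (Copp half) (Csub (Cadd (Cadd (mmul n (Spow n al k p) (pX p) kk ll) (mmul n (pX p) (ZTP n al k p) kk ll))
                               (mmul n (pX p) (Spow n al k p) kk ll))
                         (mmul n (ZTP n al k p) (pX p) kk ll)).
Proof.
  intros n al k p kk ll Hk Hkk Hll. unfold Zpart.
  set (X := pX p). set (Z := pZ p). set (D := TP n al k p).
  rewrite (dsum_comb4 n (Copp half)
      (fun i j => Cmul (D j i) (Cmul (dlt kk j) (mmul n Z X i ll)))
      (fun i j => Cmul (D j i) (Cmul (dlt i ll) (mmul n X Z kk j)))
      (fun i j => Cmul (D j i) (Cmul (Z i ll) (X kk j)))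
      (fun i j => Cmul (D j i) (Cmul (X i ll) (Z kk j)))).
  2:{ intros. simpl. unfold brXZ. fold X Z D. ring. }
  rewrite dsum_delta_l, dsum_delta_r, !dsum_sandwich by auto.
  assert (HDZ := TP_Z n al k p Hk). fold D Z in HDZ.
  assert (HZD : mmul n Z D = ZTP n al k p) by apply Z_TP.
  rewrite <- mmul_assoc, (mmul_mor n _ _ HDZ _ _ (meq_refl n X)) by auto.
  rewrite (mmul_assoc n X Z D), (mmul_assoc n X D Z), HZD.
  rewrite (mmul_mor n _ _ (meq_refl n X) _ _ HDZ) by auto. reflexivity.
Qed.

Lemma Zpart_Z : forall n al k p kk ll, (k >= 1)%nat -> (kk < n)%nat -> (ll < n)%nat ->
  Zpart n al k p (cZ kk ll) =
  Cmul half (Csub (mmul n (Spow n al k p) (pZ p) kk ll) (mmul n (pZ p) (ZTP n al k p) kk ll)).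
Proof.
  intros n al k p kk ll Hk Hkk Hll. unfold Zpart.
  set (Z := pZ p). set (D := TP n al k p).
  rewrite (dsum_comb2 n half
      (fun i j => Cmul (D j i) (Cmul (dlt kk j) (mmul n Z Z i ll)))
      (fun i j => Cmul (D j i) (Cmul (dlt i ll) (mmul n Z Z kk j)))).
  2:{ intros. simpl. fold Z D. ring. }
  rewrite dsum_delta_l, dsum_delta_r by auto.
  assert (HDZ := TP_Z n al k p Hk). fold D Z in HDZ.
  assert (HZD : mmul n Z D = ZTP n al k p) by apply Z_TP.
  rewrite <- mmul_assoc, (mmul_mor n _ _ HDZ _ _ (meq_refl n Z)) by auto.
  rewrite (mmul_assoc n Z Z D), HZD. reflexivity.
Qed.

Lemma ham_field_X : forall n d al k p kk ll, (al < d)%nat -> (k >= 1)%nat -> (kk < n)%nat -> (ll < n)%nat ->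
  clsum (coords n d) (fun a => Cmul (gradH n al k p a) (br n p a (cX kk ll))) =
  Copp (mmul n (pX p) (Spow n al k p) kk ll).
Proof.
  intros n d al k p kk ll Hd Hk Hkk Hll.
  rewrite ham_field_split, Zpart_X, (VWpart_U n d al k p (pX p) _ kk ll) by (auto; reflexivity).
  rewrite half_eq. field. exact two_neq0.
Qed.

Lemma ham_field_Z : forall n d al k p kk ll, (al < d)%nat -> (k >= 1)%nat -> (kk < n)%nat -> (ll < n)%nat ->
  clsum (coords n d) (fun a => Cmul (gradH n al k p a) (br n p a (cZ kk ll))) =
  Csub (mmul n (Spow n al k p) (pZ p) kk ll) (mmul n (pZ p) (Spow n al k p) kk ll).
Proof.
  intros n d al k p kk ll Hd Hk Hkk Hll.
  rewrite ham_field_split, Zpart_Z, (VWpart_U n d al k p (pZ p) _ kk ll) by (auto; reflexivity).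
  rewrite (ZTP_Z n al k p Hk kk ll Hkk Hll).
  rewrite half_eq. field. exact two_neq0.
Qed.

Definition signed_telE (n al k : nat) (p : point) (d b : nat) : mat :=
  msum d (fun a => mscale (o b a) (telE n al k p a)).

Lemma rowmul_signed_telE : forall n al k p d b v l,
  rowmul n v (signed_telE n al k p d b) l =
  csum d (fun a => Cmul (o b a) (Csub (Cmul (dot n v (gvec n al k p a)) (pV p a l))
                                       (Cmul (dot n v (pW p a)) (hvec n al k p a l)))).
Proof.
  intros. unfold signed_telE. rewrite rowmul_msum_scal. apply csum_ext; intros. unfold telE.
  rewrite rowmul_msub, !rowmul_outer. reflexivity.
Qed.

Lemma mulcol_signed_telE : forall n al k p d b w kk,
  mulcol n (signed_telE n al k p d b) w kk =
  csum d (fun a => Cmul (o b a) (Csub (Cmul (gvec n al k p a kk) (dot n (pV p a) w))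
                                       (Cmul (pW p a kk) (dot n (hvec n al k p a) w)))).
Proof.
  intros. unfold signed_telE. rewrite mulcol_msum_scal. apply csum_ext; intros. unfold telE.
  rewrite mulcol_msub, !mulcol_outer. reflexivity.
Qed.

Lemma Zpart_V : forall n al k p b ll, (k >= 1)%nat -> (ll < n)%nat ->
  Zpart n al k p (cV b ll) =
  Cmul half (Csub (rowmul n (pV p b) (ZTP n al k p) ll) (rowmul n (pV p b) (Spow n al k p) ll)).
Proof.
  intros n al k p b ll Hk Hll. unfold Zpart.
  set (Z := pZ p). set (D := TP n al k p). set (v := pV p b).
  rewrite (dsum_comb2 n half
      (fun i j => Cmul (D j i) (Cmul (rowmul n v Z j) (dlt i ll)))
      (fun i j => Cmul (D j i) (Cmul (v j) (Z i ll)))).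
  2:{ intros. simpl. unfold brUV. fold Z D v. ring. }
  rewrite dsum_delta_rowmul, dsum_rowmul2 by auto.
  rewrite <- !rowmul_mmul. unfold Z, D. rewrite Z_TP.
  rewrite (rowmul_meq n v _ _ ll (TP_Z n al k p Hk)) by auto. reflexivity.
Qed.

Lemma Vpart_V : forall n d al k p b ll,
  Vpart n d al k p (cV b ll) =
  csum d (fun a => Cadd (Cmul (Cmul half (Cmul (o b a) (pV p a ll))) (dot n (pV p b) (gvec n al k p a)))
                        (Cmul (Cmul half (Cmul (o b a) (pV p b ll))) (dot n (pV p a) (gvec n al k p a)))).
Proof.
  intros. unfold Vpart. apply csum_ext; intros a Ha.
  set (c1 := Cmul half (Cmul (o b a) (pV p a ll))). set (c2 := Cmul half (Cmul (o b a) (pV p b ll))).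
  rewrite (csum_ext n _ (fun j => Cadd (Cmul c1 (Cmul (pV p b j) (gvec n al k p a j)))
                                     (Cmul c2 (Cmul (pV p a j) (gvec n al k p a j))))).
  - rewrite csum_add, !csum_scal_l. reflexivity.
  - intros. simpl. unfold c1, c2. ring.
Qed.

Lemma Wpart_V : forall n d al k p b ll, (ll < n)%nat ->
  Wpart n d al k p (cV b ll) =
  csum d (fun a => Cadd (Cadd
     (Cmul (Csub (Copp (Cmul (dlt b a) (Cadd C1 (Cmul half (dot n (pV p b) (pW p b))))))
                 (Cmul half (Cmul (o b a) (dot n (pV p b) (pW p a))))) (hvec n al k p a ll))
     (Cmul (Copp (Cmul (dlt b a) (Cmul half (pV p b ll)))) (dot n (hvec n al k p a) (pW p b))))
     (Cmul (Copp (Cmul half (Cmul (o b a) (pV p b ll)))) (dot n (hvec n al k p a) (pW p a)))).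
Proof.
  intros n d al k p b ll Hll. unfold Wpart. apply csum_ext; intros a Ha.
  set (v := pV p b). set (h := hvec n al k p).
  set (c1 := Csub (Copp (Cmul (dlt b a) (Cadd C1 (Cmul half (dot n v (pW p b))))))
                  (Cmul half (Cmul (o b a) (dot n v (pW p a))))).
  set (c2 := Copp (Cmul (dlt b a) (Cmul half (v ll)))).
  set (c3 := Copp (Cmul half (Cmul (o b a) (v ll)))).
  rewrite (csum_ext n _ (fun j => Cadd (Cadd (Cmul c1 (Cmul (h a j) (dlt j ll)))
                                           (Cmul c2 (Cmul (h a j) (pW p b j))))
                                     (Cmul c3 (Cmul (h a j) (pW p a j))))).
  - rewrite !csum_add, !csum_scal_l, csum_delta_r by auto. reflexivity.
  - intros. simpl. unfold brVW, c1, c2, c3. fold v h. ring.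
Qed.

Lemma VWpart_V : forall n d al k p b ll, (b < d)%nat -> (ll < n)%nat ->
  Cadd (Vpart n d al k p (cV b ll)) (Wpart n d al k p (cV b ll)) =
  Csub (Cmul half (rowmul n (pV p b) (signed_telE n al k p d b) ll))
       (Cadd (Cadd (hvec n al k p b ll) (Cmul half (Cmul (dot n (hvec n al k p b) (pW p b)) (pV p b ll))))
             (Cmul half (Cmul (hvec n al k p b ll) (dot n (pV p b) (pW p b))))).
Proof.
  intros n d al k p b ll Hb Hll.
  rewrite Vpart_V, Wpart_V by auto. rewrite rowmul_signed_telE, <- csum_add.
  set (v := pV p b). set (g := gvec n al k p). set (h := hvec n al k p).
  rewrite (csum_ext d _ (fun a => Csub (Cmul half (Cmul (o b a) (Csub (Cmul (dot n v (g a)) (pV p a ll))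
                                     (Cmul (dot n v (pW p a)) (h a ll)))))
            (Cmul (dlt b a) (Cadd (Cadd (h a ll) (Cmul half (Cmul (dot n (h a) (pW p b)) (v ll))))
              (Cmul half (Cmul (h a ll) (dot n v (pW p b)))))))).
  - rewrite csum_sub, csum_scal_l, (csum_delta d b) by auto. reflexivity.
  - intros a Ha. unfold g, h. rewrite dot_gvec_hvec. ring.
Qed.

Lemma ham_field_V : forall n d al k p b ll, (al < d)%nat -> (k >= 1)%nat -> (b < d)%nat -> (ll < n)%nat ->
  clsum (coords n d) (fun a => Cmul (gradH n al k p a) (br n p a (cV b ll))) =
  if Nat.leb b al then Copp (rowmul n (pV p b) (Spow n al k p) ll) else C0.
Proof.
  intros n d al k p b ll Hd Hk Hb Hll.
  rewrite ham_field_split, Zpart_V, VWpart_V by auto. unfold signed_telE, ZTP.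
  destruct (Nat.leb_spec b al) as [Hba|Hba].
  - rewrite (rowmul_meq n _ _ _ ll (signed_telE_sum_le n al k p d b Hd Hba)) by auto.
    rewrite !rowmul_msub, P_ZT by auto. rewrite rowmul_Umat, rowmul_Umat_S, dot_gvec_hvec by auto.
    rewrite half_eq. field. exact two_neq0.
  - rewrite (rowmul_meq n _ _ _ ll (signed_telE_sum_gt n al k p d b Hd Hba)) by auto.
    rewrite rowmul_mneg, rowmul_msub, P_ZT by auto.
    assert (Hh : forall j, hvec n al k p b j = C0).
    { intros. unfold hvec. destruct (Nat.leb_spec b al); [lia|reflexivity]. }
    rewrite Hh. unfold dot. rewrite csum_zero' by (intros; rewrite Hh; ring).
    rewrite half_eq. field. exact two_neq0.
Qed.

Lemma Zpart_W : forall n al k p b kk, (k >= 1)%nat -> (kk < n)%nat ->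
  Zpart n al k p (cW b kk) =
  Cmul half (Csub (mulcol n (Spow n al k p) (pW p b) kk) (mulcol n (ZTP n al k p) (pW p b) kk)).
Proof.
  intros n al k p b kk Hk Hkk. unfold Zpart.
  set (Z := pZ p). set (D := TP n al k p). set (w := pW p b).
  rewrite (dsum_comb2 n half
      (fun i j => Cmul (D j i) (Cmul (dlt kk j) (mulcol n Z w i)))
      (fun i j => Cmul (D j i) (Cmul (Z kk j) (w i)))).
  2:{ intros. simpl. unfold brUW. fold Z D w. ring. }
  rewrite dsum_delta_mulcol, dsum_mulcol2 by auto.
  rewrite <- !mulcol_mmul. unfold Z, D. rewrite Z_TP.
  rewrite (mulcol_meq n w _ _ kk (TP_Z n al k p Hk)) by auto. reflexivity.
Qed.

Lemma Vpart_W : forall n d al k p b kk, (kk < n)%nat ->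
  Vpart n d al k p (cW b kk) =
  csum d (fun a => Cadd
     (Cmul (Cadd (Cmul (dlt b a) (Cadd C1 (Cmul half (dot n (pV p a) (pW p a)))))
                 (Cmul half (Cmul (o a b) (dot n (pV p a) (pW p b))))) (gvec n al k p a kk))
     (Cmul (Cadd (Cmul (dlt b a) (Cmul half (pW p a kk))) (Cmul half (Cmul (o a b) (pW p b kk))))
           (dot n (pV p a) (gvec n al k p a)))).
Proof.
  intros n d al k p b kk Hkk. unfold Vpart. apply csum_ext; intros a Ha.
  set (w := pW p b). set (g := gvec n al k p).
  set (c1 := Cadd (Cmul (dlt b a) (Cadd C1 (Cmul half (dot n (pV p a) (pW p a)))))
                  (Cmul half (Cmul (o a b) (dot n (pV p a) w)))).
  set (c2 := Cadd (Cmul (dlt b a) (Cmul half (pW p a kk))) (Cmul half (Cmul (o a b) (w kk)))).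
  rewrite (csum_ext n _ (fun j => Cadd (Cmul c1 (Cmul (dlt kk j) (g a j))) (Cmul c2 (Cmul (pV p a j) (g a j))))).
  - rewrite csum_add, !csum_scal_l, csum_delta by auto. reflexivity.
  - intros. simpl. unfold brVW, c1, c2. fold w g. rewrite (dlt_sym a b). ring.
Qed.

Lemma Wpart_W : forall n d al k p b kk,
  Wpart n d al k p (cW b kk) =
  csum d (fun a => Cadd (Cmul (Cmul half (Cmul (o b a) (pW p b kk))) (dot n (hvec n al k p a) (pW p a)))
                        (Cmul (Cmul half (Cmul (o b a) (pW p a kk))) (dot n (hvec n al k p a) (pW p b)))).
Proof.
  intros. unfold Wpart. apply csum_ext; intros a Ha.
  set (c1 := Cmul half (Cmul (o b a) (pW p b kk))). set (c2 := Cmul half (Cmul (o b a) (pW p a kk))).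
  rewrite (csum_ext n _ (fun j => Cadd (Cmul c1 (Cmul (hvec n al k p a j) (pW p a j)))
                                     (Cmul c2 (Cmul (hvec n al k p a j) (pW p b j))))).
  - rewrite csum_add, !csum_scal_l. reflexivity.
  - intros. simpl. unfold c1, c2. ring.
Qed.

Lemma VWpart_W : forall n d al k p b kk, (b < d)%nat -> (kk < n)%nat ->
  Cadd (Vpart n d al k p (cW b kk)) (Wpart n d al k p (cW b kk)) =
  Csub (Cadd (Cmul (Cadd C1 (Cmul half (dot n (pV p b) (pW p b)))) (gvec n al k p b kk))
             (Cmul (Cmul half (pW p b kk)) (dot n (pV p b) (gvec n al k p b))))
       (Cmul half (mulcol n (signed_telE n al k p d b) (pW p b) kk)).
Proof.
  intros n d al k p b kk Hb Hkk.
  rewrite Vpart_W, Wpart_W by auto. rewrite mulcol_signed_telE, <- csum_add.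
  set (w := pW p b). set (g := gvec n al k p). set (h := hvec n al k p).
  rewrite (csum_ext d _ (fun a => Csub (Cmul (dlt b a) (Cadd (Cmul (Cadd C1 (Cmul half (dot n (pV p a) (pW p a)))) (g a kk))
              (Cmul (Cmul half (pW p a kk)) (dot n (pV p a) (g a)))))
            (Cmul half (Cmul (o b a) (Csub (Cmul (g a kk) (dot n (pV p a) w)) (Cmul (pW p a kk) (dot n (h a) w))))))).
  - rewrite csum_sub, csum_scal_l, (csum_delta d b) by auto. reflexivity.
  - intros a Ha. unfold g, h. rewrite dot_gvec_hvec, (o_anti a b). ring.
Qed.

Lemma ham_field_W : forall n d al k p b kk, (al < d)%nat -> (k >= 1)%nat -> (b < d)%nat -> (kk < n)%nat ->
  clsum (coords n d) (fun a => Cmul (gradH n al k p a) (br n p a (cW b kk))) =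
  if Nat.leb b al then mulcol n (Spow n al k p) (pW p b) kk else C0.
Proof.
  intros n d al k p b kk Hd Hk Hb Hkk.
  rewrite ham_field_split, Zpart_W, VWpart_W by auto. unfold signed_telE, ZTP.
  destruct (Nat.leb_spec b al) as [Hba|Hba].
  - rewrite (mulcol_meq n _ _ _ kk (signed_telE_sum_le n al k p d b Hd Hba)) by auto.
    rewrite !mulcol_msub, P_ZT by auto. rewrite mulcol_Umat, mulcol_Umat_S, dot_gvec_hvec by auto.
    rewrite half_eq. field. exact two_neq0.
  - rewrite (mulcol_meq n _ _ _ kk (signed_telE_sum_gt n al k p d b Hd Hba)) by auto.
    rewrite mulcol_mneg, mulcol_msub, P_ZT by auto.
    assert (Hg : forall j, gvec n al k p b j = C0).
    { intros. unfold gvec. destruct (Nat.leb_spec b al); [lia|reflexivity]. }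
    rewrite Hg. unfold dot. rewrite (csum_zero' n (fun m => Cmul (pV p b m) (gvec n al k p b m))) by (intros; rewrite Hg; ring).
    rewrite half_eq. field. exact two_neq0.
Qed.

(** * The flow

   Write A = S^k at the initial point and E(t) = exp(tA).  The curve [flow]
   conjugates everything attached to S by E(t); in particular S(t) = E S E^-1,
   so S^k(t) = A for all t.  Hence its derivative, computed from
   d/dt E = A E, is exactly the Hamiltonian vector field at the current point. *)

Section Flow.
Variables (n al k : nat) (p : point).

Let A : mat := Spow n al k p.
Let Ep (t : Cx) : mat := mexpt n A t.
Let Em (t : Cx) : mat := mexpt n A (Copp t).

Lemma flow_X : forall t, meq n (pX (flow n al k p t)) (mmul n (pX p) (Em t)).
Proof. intros. unfold flow; cbn [pX]. rewrite mexp_mexpt. reflexivity. Qed.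

Lemma flow_Z : forall t, meq n (pZ (flow n al k p t)) (mmul n (mmul n (Ep t) (pZ p)) (Em t)).
Proof. intros. unfold flow; cbn [pZ]. rewrite !mexp_mexpt. reflexivity. Qed.

Lemma flow_V : forall t b l, (l < n)%nat -> pV (flow n al k p t) b l =
  if Nat.leb b al then rowmul n (pV p b) (Em t) l else pV p b l.
Proof.
  intros. unfold flow; cbn [pV]. destruct (Nat.leb b al); [|reflexivity].
  apply rowmul_meq; auto. apply mexp_mexpt.
Qed.

Lemma flow_W : forall t b l, (l < n)%nat -> pW (flow n al k p t) b l =
  if Nat.leb b al then mulcol n (Ep t) (pW p b) l else pW p b l.
Proof.
  intros. unfold flow; cbn [pW]. destruct (Nat.leb b al); [|reflexivity].
  apply mulcol_meq; auto. apply mexp_mexpt.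
Qed.

Lemma flow_V_rowmul : forall t b M l, (b <= al)%nat ->
  rowmul n (pV (flow n al k p t) b) M l = rowmul n (rowmul n (pV p b) (Em t)) M l.
Proof.
  intros t b M l Hb. apply Nat.leb_le in Hb. unfold rowmul at 1 3. apply csum_ext; intros.
  rewrite flow_V, Hb by auto. reflexivity.
Qed.

Lemma flow_W_mulcol : forall t b M l, (b <= al)%nat ->
  mulcol n M (pW (flow n al k p t) b) l = mulcol n M (mulcol n (Ep t) (pW p b)) l.
Proof.
  intros t b M l Hb. apply Nat.leb_le in Hb. unfold mulcol at 1 3. apply csum_ext; intros.
  rewrite flow_W, Hb by auto. reflexivity.
Qed.

Lemma flow_IWV_le : forall t b, (b <= al)%nat ->
  meq n (IWV (flow n al k p t) b) (mmul n (mmul n (Ep t) (IWV p b)) (Em t)).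
Proof.
  intros t b Hb. apply Nat.leb_le in Hb.
  assert (H1 : meq n (IWV (flow n al k p t) b) (madd mId (outer (mulcol n (Ep t) (pW p b)) (rowmul n (pV p b) (Em t))))).
  { intros i j Hi Hj. unfold IWV, madd, outer. rewrite flow_V, flow_W, Hb by auto. reflexivity. }
  rewrite H1, <- outer_mmul_l, <- outer_mmul_r, IWV_outer, mmul_madd_r, mmul_madd_l, mmul_id_r.
  unfold Ep, Em. rewrite mexpt_inv_r, mmul_assoc. reflexivity.
Qed.

Lemma flow_IWV_gt : forall t b, (al < b)%nat -> IWV (flow n al k p t) b = IWV p b.
Proof. intros. unfold IWV, flow; cbn [pV pW]. destruct (Nat.leb_spec b al); [lia|]. reflexivity. Qed.

Lemma flow_S : forall t, meq n (S_mat n al (flow n al k p t)) (mmul n (mmul n (Ep t) (S_mat n al p)) (Em t)).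
Proof.
  intros. unfold S_mat at 1. rewrite flow_Z.
  rewrite (mprod_down_conj n (IWV p) (IWV (flow n al k p t)) (Ep t) (Em t) (S al)).
  - unfold S_mat. rewrite !mmul_assoc. rewrite <- (mmul_assoc n (Em t) (Ep t)).
    unfold Ep, Em. rewrite mexpt_inv_l, mmul_id_l. reflexivity.
  - apply mexpt_inv_r.
  - apply mexpt_inv_l.
  - intros. apply flow_IWV_le. lia.
Qed.

Lemma flow_Spow : forall t, meq n (Spow n al k (flow n al k p t)) A.
Proof.
  intros. unfold Spow at 1. rewrite flow_S, mpow_conj by (try apply mexpt_inv_r; apply mexpt_inv_l).
  fold (Spow n al k p). fold A. unfold Ep, Em.
  rewrite <- mexpt_commA, mmul_assoc, mexpt_inv_r. apply mmul_id_r.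
Qed.

Lemma flow_deriv_X : forall t kk ll, (kk < n)%nat -> (ll < n)%nat ->
  has_cderiv (fun s => pX (flow n al k p s) kk ll) t
    (Copp (mmul n (pX (flow n al k p t)) (Spow n al k (flow n al k p t)) kk ll)).
Proof.
  intros t kk ll Hkk Hll.
  eapply cderiv_ext; [intros s; symmetry; apply flow_X; auto|].
  apply (cderiv_val _ _ (madd (mmul n mzero (Em t)) (mmul n (pX p) (mneg (mmul n A (Em t)))) kk ll)).
  - apply (mderiv_mmul n (fun _ => pX p) Em); auto; [apply mderiv_const| apply mderiv_mexpt_neg].
  - assert (Hm : meq n (madd (mmul n mzero (Em t)) (mmul n (pX p) (mneg (mmul n A (Em t)))))
                        (mneg (mmul n (pX (flow n al k p t)) (Spow n al k (flow n al k p t))))).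
    { rewrite mmul_zero_l, flow_X, flow_Spow, mmul_mneg_r. unfold Em.
      rewrite mexpt_commA, mmul_assoc. intros i j _ _. unfold madd, mzero, mneg. ring. }
    rewrite (Hm kk ll) by auto. reflexivity.
Qed.

Lemma flow_deriv_Z : forall t kk ll, (kk < n)%nat -> (ll < n)%nat ->
  has_cderiv (fun s => pZ (flow n al k p s) kk ll) t
    (Csub (mmul n (Spow n al k (flow n al k p t)) (pZ (flow n al k p t)) kk ll)
          (mmul n (pZ (flow n al k p t)) (Spow n al k (flow n al k p t)) kk ll)).
Proof.
  intros t kk ll Hkk Hll.
  eapply cderiv_ext; [intros s; symmetry; apply flow_Z; auto|].
  apply (cderiv_val _ _ (madd (mmul n (madd (mmul n (mmul n A (Ep t)) (pZ p)) (mmul n (Ep t) mzero)) (Em t))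
                              (mmul n (mmul n (Ep t) (pZ p)) (mneg (mmul n A (Em t)))) kk ll)).
  - apply (mderiv_mmul n (fun s => mmul n (Ep s) (pZ p)) Em); auto; [|apply mderiv_mexpt_neg].
    apply (mderiv_mmul n Ep (fun _ => pZ p)); [apply mderiv_mexpt| apply mderiv_const].
  - assert (Hm : meq n (madd (mmul n (madd (mmul n (mmul n A (Ep t)) (pZ p)) (mmul n (Ep t) mzero)) (Em t))
                             (mmul n (mmul n (Ep t) (pZ p)) (mneg (mmul n A (Em t)))))
                   (msub (mmul n (Spow n al k (flow n al k p t)) (pZ (flow n al k p t)))
                         (mmul n (pZ (flow n al k p t)) (Spow n al k (flow n al k p t))))).
    { rewrite flow_Z, !flow_Spow. unfold Ep, Em.
      rewrite mmul_zero_r, madd_zero_r, mmul_mneg_r, !mmul_assoc, (mexpt_commA n A (Copp t)).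
      rewrite <- (mmul_assoc n A (mexpt n A t)), (mexpt_commA n A t), mmul_assoc.
      intros i j _ _. unfold madd, mneg, msub. ring. }
    rewrite (Hm kk ll) by auto. reflexivity.
Qed.

Lemma flow_deriv_V : forall t b ll, (ll < n)%nat ->
  has_cderiv (fun s => pV (flow n al k p s) b ll) t
    (if Nat.leb b al then Copp (rowmul n (pV (flow n al k p t) b) (Spow n al k (flow n al k p t)) ll) else C0).
Proof.
  intros t b ll Hll.
  eapply cderiv_ext; [intros s; symmetry; apply flow_V; auto|].
  destruct (Nat.leb_spec b al) as [Hb|Hb]; [|apply cderiv_const].
  apply (cderiv_val _ _ (csum n (fun m => Cmul (pV p b m) (mneg (mmul n A (Em t)) m ll)))).
  - apply cderiv_csum. intros m Hm. apply cderiv_scal. apply mderiv_mexpt_neg; auto.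
  - rewrite (rowmul_meq n _ _ _ ll (flow_Spow t)), flow_V_rowmul, <- rowmul_mmul by auto.
    rewrite <- (rowmul_meq n _ _ _ ll (mexpt_commA n A (Copp t))) by auto.
    unfold rowmul, mneg, Em. rewrite <- csum_opp. apply csum_ext; intros; ring.
Qed.

Lemma flow_deriv_W : forall t b kk, (kk < n)%nat ->
  has_cderiv (fun s => pW (flow n al k p s) b kk) t
    (if Nat.leb b al then mulcol n (Spow n al k (flow n al k p t)) (pW (flow n al k p t) b) kk else C0).
Proof.
  intros t b kk Hkk.
  eapply cderiv_ext; [intros s; symmetry; apply flow_W; auto|].
  destruct (Nat.leb_spec b al) as [Hb|Hb]; [|apply cderiv_const].
  apply (cderiv_val _ _ (csum n (fun m => Cmul (pW p b m) (mmul n A (Ep t) kk m)))).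
  - apply cderiv_csum. intros m Hm.
    eapply cderiv_ext; [|apply cderiv_scal; apply (mderiv_mexpt n A t kk m); auto].
    intros; unfold Ep; ring.
  - rewrite (mulcol_meq n _ _ _ kk (flow_Spow t)), flow_W_mulcol, <- mulcol_mmul by auto.
    unfold mulcol. apply csum_ext; intros; ring.
Qed.

Lemma flow_X_inverse : forall t, invertible n (pX p) ->
  is_inverse n (pX (flow n al k p t)) (mmul n (Ep t) (minv n (pX p))).
Proof.
  intros t HX. eapply is_inverse_meq; [symmetry; apply flow_X| reflexivity|].
  apply inverse_mul; [apply minv_spec; exact HX| split; [apply mexpt_inv_l| apply mexpt_inv_r]].
Qed.

Lemma flow_Z_inverse : forall t, invertible n (pZ p) ->
  is_inverse n (pZ (flow n al k p t)) (mmul n (Ep t) (mmul n (minv n (pZ p)) (Em t))).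
Proof.
  intros t HZ. eapply is_inverse_meq; [symmetry; apply flow_Z| reflexivity|].
  apply conj_inverse; [apply mexpt_inv_r| apply mexpt_inv_l| apply minv_spec; exact HZ].
Qed.

Definition flow_IWV_inv (t : Cx) (b : nat) : mat :=
  if Nat.leb b al then mmul n (Ep t) (mmul n (minv n (IWV p b)) (Em t)) else minv n (IWV p b).

Lemma flow_IWV_inverse : forall t b, invertible n (IWV p b) ->
  is_inverse n (IWV (flow n al k p t) b) (flow_IWV_inv t b).
Proof.
  intros t b Hb. unfold flow_IWV_inv. destruct (Nat.leb_spec b al).
  - eapply is_inverse_meq; [symmetry; apply flow_IWV_le; auto| reflexivity|].
    apply conj_inverse; [apply mexpt_inv_r| apply mexpt_inv_l| apply minv_spec; auto].
  - rewrite flow_IWV_gt by auto. apply minv_spec; auto.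
Qed.

(* The moment-map equation X Z X^-1 Z^-1 prod_a F_a^-1 = q is preserved: the
   factors E(t), E(-t) cancel in pairs, except around Z^-1 F_0^-1 ... F_al^-1 = S^-1,
   which commutes with E(t). *)
Lemma flow_in_M : forall d q t, (al < d)%nat -> in_M n d q p -> in_M n d q (flow n al k p t).
Proof.
  intros d q t Hd [HX [HZ [HL Hm]]].
  set (E := Ep t). set (F := Em t).
  assert (HEF : meq n (mmul n E F) mId) by apply mexpt_inv_r.
  assert (HFE : meq n (mmul n F E) mId) by apply mexpt_inv_l.
  pose proof (flow_X_inverse t HX) as IXt. pose proof (flow_Z_inverse t HZ) as IZt.
  split; [eexists; exact IXt|]. split; [eexists; exact IZt|].
  split; [intros a Ha; eexists; apply flow_IWV_inverse; auto|].
  rewrite (minv_meq n _ _ (ex_intro _ _ IXt) IXt), (minv_meq n _ _ (ex_intro _ _ IZt) IZt).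
  rewrite (mprod_up_ext_meq n _ (flow_IWV_inv t) d)
    by (intros a Ha; apply minv_meq; [eexists|]; apply flow_IWV_inverse; auto).
  rewrite flow_X, flow_Z. fold E F.
  replace d with (S al + (d - S al))%nat in * by lia.
  rewrite mprod_up_split in *.
  rewrite (mprod_up_conj n (fun a => minv n (IWV p a)) _ E F (S al) HEF HFE).
  2:{ intros m Hm'. unfold flow_IWV_inv. destruct (Nat.leb_spec m al); [|lia]. rewrite mmul_assoc. reflexivity. }
  rewrite (mprod_up_ext_meq n (fun m => flow_IWV_inv t (S al + m)) (fun m => minv n (IWV p (S al + m))) (d - S al)).
  2:{ intros m Hm'. unfold flow_IWV_inv. destruct (Nat.leb_spec (S al + m) al); [lia|reflexivity]. }
  set (K := mprod_up n (fun a => minv n (IWV p a)) (S al)) in *.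
  set (R := mprod_up n (fun m => minv n (IWV p (S al + m))) (d - S al)) in *.
  set (Xi := minv n (pX p)) in *. set (Zi := minv n (pZ p)) in *.
  assert (HS : is_inverse n (S_mat n al p) (mmul n Zi K)).
  { unfold S_mat. apply inverse_mul; [|apply minv_spec; auto].
    apply mprod_inverse. intros; apply minv_spec; apply HL; lia. }
  assert (HEZK : meq n (mmul n E (mmul n Zi K)) (mmul n (mmul n Zi K) E)).
  { apply (comm_inverse n E (S_mat n al p)); auto.
    symmetry. apply mexpt_comm. fold A. unfold A, Spow. apply mpow_comm. }
  rewrite !mmul_assoc, !(cancel_l n E F) by auto.
  assert (HC : meq n (mmul n E (mmul n Zi (mmul n K (mmul n F R)))) (mmul n Zi (mmul n K R))).
  { rewrite <- (mmul_assoc n Zi K), <- (mmul_assoc n E), HEZK, !mmul_assoc, (cancel_l n F E) by auto.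
    reflexivity. }
  rewrite HC, <- Hm, !mmul_assoc. reflexivity.
Qed.

Lemma flow_at0 : forall d c, In c (coords n d) -> coord_val (flow n al k p C0) c = coord_val p c.
Proof.
  intros d c Hc. apply in_coords in Hc.
  assert (H0 : meq n (Ep C0) mId) by apply mexpt_0.
  assert (H0' : meq n (Em C0) mId) by (unfold Em; replace (Copp C0) with C0 by ring; apply mexpt_0).
  destruct c as [i j|i j|a j|a j]; destruct Hc as [H1 H2]; cbn [coord_val].
  - rewrite (flow_X C0 i j) by auto. rewrite (mmul_mor n _ _ (meq_refl n (pX p)) _ _ H0') by auto.
    apply mmul_id_r; auto.
  - rewrite (flow_Z C0 i j) by auto. rewrite (mmul_mor n _ _ (mmul_mor n _ _ H0 _ _ (meq_refl n (pZ p))) _ _ H0') by auto.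
    rewrite (mmul_id_r n _ i j H1 H2). apply mmul_id_l; auto.
  - rewrite flow_V by auto. destruct (Nat.leb a al); [|reflexivity].
    rewrite (rowmul_meq n _ _ _ j H0') by auto. apply rowmul_id; auto.
  - rewrite flow_W by auto. destruct (Nat.leb a al); [|reflexivity].
    rewrite (mulcol_meq n _ _ _ j H0) by auto. apply mulcol_id; auto.
Qed.

End Flow.

Lemma flow_is_hamiltonian : forall n d al k p t c, (al < d)%nat -> (k >= 1)%nat -> In c (coords n d) ->
  has_cderiv (fun s => coord_val (flow n al k p s) c) t
    (clsum (coords n d) (fun a => Cmul (gradH n al k (flow n al k p t) a) (br n (flow n al k p t) a c))).
Proof.
  intros n d al k p t c Hd Hk Hc. pose proof (in_coords n d c Hc) as Hr.
  destruct c as [i j|i j|b j|b j]; destruct Hr as [H1 H2]; cbn [coord_val].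
  - rewrite ham_field_X by auto. apply flow_deriv_X; auto.
  - rewrite ham_field_Z by auto. apply flow_deriv_Z; auto.
  - rewrite ham_field_V by auto. apply flow_deriv_V; auto.
  - rewrite ham_field_W by auto. apply flow_deriv_W; auto.
Qed.

Theorem mainTheorem16 :
  forall (n d : nat) (q : Cx), (n >= 1)%nat -> (d >= 1)%nat ->
  q <> C0 -> ~ root_of_unity q ->
  forall (alpha k : nat), (alpha < d)%nat -> (k >= 1)%nat ->
  forall p : point, in_M n d q p ->
    (forall c : coord, In c (coords n d) ->
       coord_val (flow n alpha k p C0) c = coord_val p c) /\
    (forall t : Cx,
       in_M n d q (flow n alpha k p t) /\
       forall c : coord, In c (coords n d) ->
         exists dH : coord -> Cx,
           (forall a : coord, In a (coords n d) ->
              has_cderiv (fun z => Ham n alpha k (upd (flow n alpha k p t) a z)) C0 (dH a)) /\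
           has_cderiv (fun s => coord_val (flow n alpha k p s) c) t
             (clsum (coords n d) (fun a => Cmul (dH a) (br n (flow n alpha k p t) a c)))).
Proof.
  intros n d q _ _ _ _ al k Hal Hk p HM. split.
  - intros c Hc. apply (flow_at0 n al k p d c Hc).
  - intros t. split; [apply flow_in_M; auto|].
    intros c Hc. exists (gradH n al k (flow n al k p t)). split.
    + intros a Ha. apply (Ham_deriv n d); auto.
    + apply flow_is_hamiltonian; auto.
Qed.
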